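(* Let $f=f^\alpha$ be a developable strip along an arc-length parametrized $C^\infty$ embedded curve $\mathbf c:I\to\mathbb R^3$ with curvature $\kappa>0$, let $C=\mathbf c(I)$, and let $\epsilon>0$ be sufficiently small. Suppose $C$ has no symmetries, i.e. there is no isometry $T\neq\mathrm{id}$ of $\mathbb R^3$ with $T(C)=C$. Then for every $\delta\in(0,\epsilon]$, the set $\phi_f(\Omega_\delta)$ is not congruent to any subset of $\psi_f(\Omega_\epsilon)$; that is, there is no isometry $T$ of $\mathbb R^3$ with $T(\phi_f(\Omega_\delta))\subset\psi_f(\Omega_\epsilon)$. Here $\Omega_\delta=I\times(-\delta,\delta)$.
   Context: Space curves. For a $C^\infty$ curve $\mathbf c:I\to\mathbb R^3$, $I=[a,b]$, parametrized by arc length with curvature $\kappa=|\mathbf c''|>0$, set $\mathbf e=\mathbf c'$, $\mathbf n=\mathbf c''/\kappa$, $\mathbf b=\mathbf e\times\mathbf n$, and torsion $\tau:=\mathbf n'\cdot\mathbf b$. Developable strips. Given $C^\infty$ functions $\alpha,\beta$ on $I$ with $0<|\alpha(t)|<\pi/2$ and $0<\beta(t)<\pi$, the ruled surface is $f(t,v)=\mathbf c(t)+v\,\xi(t)$, $(t,v)\in I\times(-\epsilon,\epsilon)$, with $\xi=\cos\beta\,\mathbf e+\sin\beta(\cos\alpha\,\mathbf n+\sin\alpha\,\mathbf b)$; $\alpha$ is the first angular function. $f$ is developable iff $\cot\beta=(\alpha'+\tau)/(\kappa\sin\alpha)$; the developable strip with first angular function $\alpha$ is denoted $f^\alpha$.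 The dual of $f=f^\alpha$ is $\check f:=f^{-\alpha}$. Origami maps. $\phi_f(t,v)=f(t,v)$ for $v\ge0$ and $\phi_f(t,v)=\check f(t,v)$ for $v<0$; $\psi_f(t,v)=\check f(t,v)$ for $v\ge0$ and $\psi_f(t,v)=f(t,v)$ for $v<0$. *)

From Stdlib Require Import Reals.
Open Scope R_scope.

Record R3 := mkR3 { x1 : R; x2 : R; x3 : R }.

Definition vadd (u v : R3) : R3 := mkR3 (x1 u + x1 v) (x2 u + x2 v) (x3 u + x3 v).
Definition vscale (k : R) (u : R3) : R3 := mkR3 (k * x1 u) (k * x2 u) (k * x3 u).
Definition vsub (u v : R3) : R3 := mkR3 (x1 u - x1 v) (x2 u - x2 v) (x3 u - x3 v).
Definition dot (u v : R3) : R := x1 u * x1 v + x2 u * x2 v + x3 u * x3 v.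
Definition cross (u v : R3) : R3 :=
  mkR3 (x2 u * x3 v - x3 u * x2 v) (x3 u * x1 v - x1 u * x3 v) (x1 u * x2 v - x2 u * x1 v).
Definition vnorm (u : R3) : R := sqrt (dot u u).
Definition dist3 (u v : R3) : R := vnorm (vsub u v).

Definition deriv3 (c d : R -> R3) (t : R) : Prop :=
  derivable_pt_lim (fun s => x1 (c s)) t (x1 (d t)) /\
  derivable_pt_lim (fun s => x2 (c s)) t (x2 (d t)) /\
  derivable_pt_lim (fun s => x3 (c s)) t (x3 (d t)).

Definition smooth (f : R -> R) : Prop :=
  exists D : nat -> R -> R, (forall t, D O t = f t) /\
    forall n t, derivable_pt_lim (D n) t (D (S n) t).
Definition smooth3 (c : R -> R3) : Prop :=
  smooth (fun t => x1 (c t)) /\ smooth (fun t => x2 (c t)) /\ smooth (fun t => x3 (c t)).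

(* Frenet data, in terms of ce = c' and cdd = c'' *)
Definition curvature (cdd : R -> R3) (t : R) : R := vnorm (cdd t).
Definition normal (cdd : R -> R3) (t : R) : R3 := vscale (/ curvature cdd t) (cdd t).
Definition binormal (ce cdd : R -> R3) (t : R) : R3 := cross (ce t) (normal cdd t).
(* nd is the derivative n' of the normal *)
Definition torsion (ce cdd nd : R -> R3) (t : R) : R := dot (nd t) (binormal ce cdd t).

Definition ruling (ce cdd : R -> R3) (al be : R -> R) (t : R) : R3 :=
  vadd (vscale (cos (be t)) (ce t))
       (vscale (sin (be t)) (vadd (vscale (cos (al t)) (normal cdd t))
                                  (vscale (sin (al t)) (binormal ce cdd t)))).
Definition strip (c ce cdd : R -> R3) (al be : R -> R) (t v : R) : R3 :=
  vadd (c t) (vscale v (ruling ce cdd al be t)).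

(* be is the second angular function making the strip with first angular
   function al (with derivative ald) developable on [a,b]:
   0 < be < PI and cot be = (al' + tau)/(kappa sin al). *)
Definition developable_angle (a b : R) (ce cdd nd : R -> R3) (al ald be : R -> R) : Prop :=
  forall t, a <= t <= b ->
    0 < be t < PI /\
    cos (be t) / sin (be t) = (ald t + torsion ce cdd nd t) / (curvature cdd t * sin (al t)).

Definition negf (f : R -> R) : R -> R := fun t => - f t.

(* phi_f(Omega_delta), with f = f^al (second angle be) and dual f^{-al} (second angle bec) *)
Definition phi_img (a b : R) (c ce cdd : R -> R3) (al be bec : R -> R) (delta : R) (p : R3) : Prop :=
  exists t v, a <= t <= b /\
    ((0 <= v < delta /\ p = strip c ce cdd al be t v) \/
     (- delta < v < 0 /\ p = strip c ce cdd (negf al) bec t v)).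

Definition psi_img (a b : R) (c ce cdd : R -> R3) (al be bec : R -> R) (eps : R) (p : R3) : Prop :=
  exists t v, a <= t <= b /\
    ((0 <= v < eps /\ p = strip c ce cdd (negf al) bec t v) \/
     (- eps < v < 0 /\ p = strip c ce cdd al be t v)).

Definition isometry (T : R3 -> R3) : Prop := forall p q, dist3 (T p) (T q) = dist3 p q.

Definition no_symmetry (a b : R) (c : R -> R3) : Prop :=
  forall T, isometry T ->
    (forall t, a <= t <= b -> exists s, a <= s <= b /\ T (c t) = c s) ->
    (forall s, a <= s <= b -> exists t, a <= t <= b /\ T (c t) = c s) ->
    forall p, T p = p.

From Stdlib Require Import Reals Lra Psatz Classical_Prop FunctionalExtensionality IndefiniteDescription.
From Coquelicot Require Import Coquelicot.
Open Scope R_scope.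

(* An isometry T mapping phi_f(Omega_delta) into psi_f(Omega_eps) must map the curve C into itself: at a
   point of C, phi_f(Omega_delta) contains C and segments along the rulings of both f and its dual, and
   these three directions span R^3, whereas at a point off C the set psi_f(Omega_eps) is flat to first
   order, because the strips are developable. The map induced by T on the parameter interval is then
   locally almost isometric, hence onto, so T(C) = C and T is the identity. It remains to see that
   phi_f(Omega_delta) is not contained in psi_f(Omega_eps): near c(a), up to a quadratic error, psi_f lies
   on one side of the osculating plane, while the sheet v > 0 of phi_f, which is f, leaves it linearly
   on the other side. *)

(** * Vector algebra in R^3 *)

Ltac vunfold := unfold dot, cross, vadd, vscale, vsub in *; simpl in *.

Definition vzero := mkR3 0 0 0.

Lemma R3_ext u v : x1 u = x1 v -> x2 u = x2 v -> x3 u = x3 v -> u = v.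
Proof. destruct u, v; simpl; intros; subst; reflexivity. Qed.

Lemma sq_nonneg x : 0 <= x * x.
Proof. apply Rle_0_sqr. Qed.

Lemma dot_comm u v : dot u v = dot v u.
Proof. vunfold; ring. Qed.
Lemma dot_ge0 u : 0 <= dot u u.
Proof. vunfold; nra. Qed.
Lemma dot_addl u v w : dot (vadd u v) w = dot u w + dot v w.
Proof. vunfold; ring. Qed.
Lemma dot_addr u v w : dot w (vadd u v) = dot w u + dot w v.
Proof. vunfold; ring. Qed.
Lemma dot_subl u v w : dot (vsub u v) w = dot u w - dot v w.
Proof. vunfold; ring. Qed.
Lemma dot_subr u v w : dot w (vsub u v) = dot w u - dot w v.
Proof. vunfold; ring. Qed.
Lemma dot_scalel k u w : dot (vscale k u) w = k * dot u w.
Proof. vunfold; ring. Qed.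
Lemma dot_scaler k u w : dot w (vscale k u) = k * dot w u.
Proof. vunfold; ring. Qed.
Lemma dot_zeror u : dot u vzero = 0.
Proof. vunfold; ring. Qed.
Lemma dot_sub_sq u v : dot (vsub u v) (vsub u v) = dot u u - 2 * dot u v + dot v v.
Proof. vunfold; ring. Qed.

Ltac dot_expand := repeat (rewrite ?dot_addl, ?dot_addr, ?dot_subl, ?dot_subr, ?dot_scalel, ?dot_scaler).

Lemma dot_self_eq0 u : dot u u = 0 -> u = vzero.
Proof. intros H. vunfold. apply R3_ext; simpl; nra. Qed.

Lemma lagrange_identity u v :
  dot (cross u v) (cross u v) = dot u u * dot v v - dot u v * dot u v.
Proof. vunfold; ring. Qed.
Lemma binet_cauchy p q r s :
  dot (cross p q) (cross r s) = dot p r * dot q s - dot p s * dot q r.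
Proof. vunfold; ring. Qed.
Lemma dot_cross_swap n e x : dot n (cross e x) = - dot x (cross e n).
Proof. vunfold; ring. Qed.
Lemma cross_scale_self k n : cross (vscale k n) n = vzero.
Proof. apply R3_ext; vunfold; ring. Qed.

Lemma cauchy_schwarz_sq u v : dot u v * dot u v <= dot u u * dot v v.
Proof. pose proof (lagrange_identity u v); pose proof (dot_ge0 (cross u v)); lra. Qed.

Lemma vnorm_ge0 u : 0 <= vnorm u.
Proof. apply sqrt_pos. Qed.
Lemma vnorm_sq u : vnorm u * vnorm u = dot u u.
Proof. apply sqrt_sqrt, dot_ge0. Qed.
Lemma vnorm_of_dot u r : 0 <= r -> dot u u = r * r -> vnorm u = r.
Proof. intros Hr H; unfold vnorm; rewrite H; apply sqrt_square; auto. Qed.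
Lemma vnorm_unit u : dot u u = 1 -> vnorm u = 1.
Proof. intros H. apply vnorm_of_dot; lra. Qed.
Lemma vnorm_le_of_dot u r : 0 <= r -> dot u u <= r * r -> vnorm u <= r.
Proof. intros Hr H. pose proof (vnorm_sq u). pose proof (vnorm_ge0 u). nra. Qed.

Lemma cauchy_schwarz u v : Rabs (dot u v) <= vnorm u * vnorm v.
Proof.
  apply Rsqr_incr_0_var; [|apply Rmult_le_pos; apply vnorm_ge0]. unfold Rsqr.
  rewrite <- Rabs_mult, Rabs_pos_eq by apply sq_nonneg.
  replace (vnorm u * vnorm v * (vnorm u * vnorm v)) with ((vnorm u * vnorm u) * (vnorm v * vnorm v)) by ring.
  rewrite !vnorm_sq. apply cauchy_schwarz_sq.
Qed.

Lemma abs_dot_unit u v : dot v v = 1 -> Rabs (dot u v) <= vnorm u.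
Proof. intros H. pose proof (cauchy_schwarz u v). rewrite (vnorm_unit v H) in *. lra. Qed.

Lemma vnorm_triangle u v : vnorm (vadd u v) <= vnorm u + vnorm v.
Proof.
  apply vnorm_le_of_dot; [pose proof (vnorm_ge0 u); pose proof (vnorm_ge0 v); lra|].
  rewrite dot_addl, !dot_addr, (dot_comm v u). pose proof (cauchy_schwarz u v).
  pose proof (vnorm_sq u). pose proof (vnorm_sq v). pose proof (Rle_abs (dot u v)). nra.
Qed.

Lemma vnorm_scale k u : vnorm (vscale k u) = Rabs k * vnorm u.
Proof.
  apply vnorm_of_dot; [pose proof (Rabs_pos k); pose proof (vnorm_ge0 u); nra|].
  rewrite dot_scalel, dot_scaler, <- vnorm_sq.
  replace (Rabs k * vnorm u * (Rabs k * vnorm u)) with ((Rabs k * Rabs k) * (vnorm u * vnorm u)) by ring.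
  rewrite <- Rabs_mult, Rabs_pos_eq by apply sq_nonneg. ring.
Qed.

Lemma vnorm_rev_triangle u v : vnorm u - vnorm v <= vnorm (vadd u v).
Proof.
  pose proof (vnorm_triangle (vadd u v) (vscale (-1) v)) as H.
  replace (vadd (vadd u v) (vscale (-1) v)) with u in H by (apply R3_ext; vunfold; ring).
  rewrite vnorm_scale in H. replace (Rabs (-1)) with 1 in H by (rewrite Rabs_left; lra). lra.
Qed.

Lemma vnorm_sub_triangle u v w : vnorm (vsub u w) <= vnorm (vsub u v) + vnorm (vsub v w).
Proof.
  replace (vsub u w) with (vadd (vsub u v) (vsub v w)) by (apply R3_ext; vunfold; ring).
  apply vnorm_triangle.
Qed.

Lemma vnorm_sub_sym u v : vnorm (vsub u v) = vnorm (vsub v u).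
Proof. unfold vnorm; f_equal; vunfold; ring. Qed.

Lemma vnorm_comp_bound u : vnorm u <= Rabs (x1 u) + Rabs (x2 u) + Rabs (x3 u).
Proof.
  pose proof (Rabs_pos (x1 u)); pose proof (Rabs_pos (x2 u)); pose proof (Rabs_pos (x3 u)).
  apply vnorm_le_of_dot; [lra|]. unfold dot.
  assert (Hs : forall x, x * x = Rabs x * Rabs x)
    by (intros x; rewrite <- Rabs_mult, Rabs_pos_eq; [ring|apply sq_nonneg]).
  rewrite (Hs (x1 u)), (Hs (x2 u)), (Hs (x3 u)). nra.
Qed.

Lemma parseval (v1 v2 v3 m : R3) :
  dot v1 v1 = 1 -> dot v2 v2 = 1 -> dot v3 v3 = 1 ->
  dot v1 v2 = 0 -> dot v1 v3 = 0 -> dot v2 v3 = 0 ->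
  dot m m = dot m v1 * dot m v1 + dot m v2 * dot m v2 + dot m v3 * dot m v3.
Proof.
  intros H11 H22 H33 H12 H13 H23.
  set (D := dot v1 (cross v2 v3)).
  assert (HD : D * D = 1).
  { assert (E : D * D = dot v1 v1 * dot v2 v2 * dot v3 v3 + 2 * dot v1 v2 * dot v2 v3 * dot v1 v3
       - dot v1 v1 * dot v2 v3 * dot v2 v3 - dot v2 v2 * dot v1 v3 * dot v1 v3
       - dot v3 v3 * dot v1 v2 * dot v1 v2) by (unfold D; vunfold; ring).
    rewrite E, H11, H22, H33, H12, H13, H23; ring. }
  (* Cramer's rule: D m = d1 v1 + d2 v2 + d3 v3 with d_i = D <m, v_i> *)
  set (d1 := dot m (cross v2 v3)). set (d2 := dot v1 (cross m v3)). set (d3 := dot v1 (cross v2 m)).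
  assert (Cr : vscale D m = vadd (vscale d1 v1) (vadd (vscale d2 v2) (vscale d3 v3))).
  { apply R3_ext; unfold D, d1, d2, d3; vunfold; ring. }
  assert (Hproj : forall v, D * dot m v = dot (vadd (vscale d1 v1) (vadd (vscale d2 v2) (vscale d3 v3))) v).
  { intros v. rewrite <- Cr, dot_scalel. ring. }
  assert (E1 : D * dot m v1 = d1).
  { rewrite Hproj. dot_expand. rewrite (dot_comm v2 v1), (dot_comm v3 v1), H11, H12, H13. ring. }
  assert (E2 : D * dot m v2 = d2).
  { rewrite Hproj. dot_expand. rewrite (dot_comm v3 v2), H22, H12, H23. ring. }
  assert (E3 : D * dot m v3 = d3).
  { rewrite Hproj. dot_expand. rewrite H33, H13, H23. ring. }
  assert (E : D * D * dot m m = d1 * d1 + d2 * d2 + d3 * d3).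
  { replace (D * D * dot m m) with (dot (vscale D m) (vscale D m)) by (rewrite dot_scalel, dot_scaler; ring).
    rewrite Cr. dot_expand.
    rewrite (dot_comm v2 v1), (dot_comm v3 v1), (dot_comm v3 v2), H11, H22, H33, H12, H13, H23. ring. }
  rewrite HD, <- E1, <- E2, <- E3 in E. nra.
Qed.

Set Implicit Arguments.
Record orth_linear (U : R3 -> R3) : Prop := {
  orth_dot : forall x y, dot (U x) (U y) = dot x y;
  orth_scale : forall k x, U (vscale k x) = vscale k (U x);
  orth_add : forall x y, U (vadd x y) = vadd (U x) (U y) }.
Unset Implicit Arguments.

Lemma orth_vnorm U : orth_linear U -> forall x, vnorm (U x) = vnorm x.
Proof. intros HU x. unfold vnorm. rewrite (orth_dot HU). auto. Qed.

Lemma isometry_linear_part (T : R3 -> R3) : isometry T -> exists U : R3 -> R3,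
  orth_linear U /\ forall p q, vsub (T p) (T q) = U (vsub p q).
Proof.
  intros HT. set (U := fun x => vsub (T x) (T vzero)).
  assert (Hd : forall p q, dot (vsub (T p) (T q)) (vsub (T p) (T q)) = dot (vsub p q) (vsub p q)).
  { intros p q. rewrite <- !vnorm_sq. fold (dist3 (T p) (T q)) (dist3 p q). rewrite HT. ring. }
  assert (Hdiff : forall x y, vsub (U x) (U y) = vsub (T x) (T y)).
  { intros. unfold U. apply R3_ext; vunfold; ring. }
  assert (Hn : forall x, dot (U x) (U x) = dot x x).
  { intros x. unfold U. rewrite Hd. f_equal; apply R3_ext; unfold vzero; vunfold; ring. }
  assert (Hdot : forall x y, dot (U x) (U y) = dot x y).
  { intros x y. pose proof (Hd x y) as H. rewrite <- Hdiff, !dot_sub_sq, !Hn in H. lra. }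
  (* additivity and homogeneity: the defect has zero norm *)
  assert (Hadd : forall x y, U (vadd x y) = vadd (U x) (U y)).
  { intros x y. assert (H0 : dot (vsub (U (vadd x y)) (vadd (U x) (U y))) (vsub (U (vadd x y)) (vadd (U x) (U y))) = 0).
    { rewrite dot_sub_sq. dot_expand. rewrite !Hdot. vunfold; ring. }
    apply dot_self_eq0 in H0. unfold vzero in H0; vunfold.
    injection H0; intros; apply R3_ext; simpl; lra. }
  assert (Hsc : forall k x, U (vscale k x) = vscale k (U x)).
  { intros k x. assert (H0 : dot (vsub (U (vscale k x)) (vscale k (U x))) (vsub (U (vscale k x)) (vscale k (U x))) = 0).
    { rewrite dot_sub_sq. dot_expand. rewrite !Hdot. vunfold; ring. }
    apply dot_self_eq0 in H0. unfold vzero in H0; vunfold.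
    injection H0; intros; apply R3_ext; simpl; lra. }
  exists U. split; [split; auto|]. intros p q. rewrite <- Hdiff.
  replace p with (vadd (vsub p q) q) at 1 by (apply R3_ext; vunfold; ring).
  rewrite Hadd. apply R3_ext; vunfold; ring.
Qed.

(** * Lipschitz and bounded functions on an interval *)

Definition lipbnd (a b : R) (f : R -> R) := exists K M, 0 <= K /\ 0 <= M /\
  (forall s s', a <= s <= b -> a <= s' <= b -> Rabs (f s - f s') <= K * Rabs (s - s')) /\
  (forall s, a <= s <= b -> Rabs (f s) <= M).

Lemma mul_div_succ_le K x : 0 <= K -> 0 <= x -> K * (x / (K + 1)) <= x.
Proof.
  intros HK Hx. replace (K * (x / (K + 1))) with (x - x / (K + 1)) by (field; lra).
  assert (0 <= x / (K + 1)) by (apply Rdiv_le_0_compat; lra). lra.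
Qed.

Lemma lip_on_of_deriv a b (f f' : R -> R) L :
  (forall x, a <= x <= b -> derivable_pt_lim f x (f' x)) ->
  (forall x, a <= x <= b -> Rabs (f' x) <= L) ->
  forall x y, a <= x <= b -> a <= y <= b -> Rabs (f x - f y) <= L * Rabs (x - y).
Proof.
  intros Hd Hb x y Hx Hy.
  assert (Hmvt : forall x y, a <= x <= b -> a <= y <= b -> x < y -> Rabs (f x - f y) <= L * Rabs (x - y)).
  { clear x y Hx Hy. intros x y Hx Hy Hxy.
    destruct (MVT_cor2 f f' x y Hxy (fun c Hc => Hd c ltac:(lra))) as [c [Hc Hc']].
    rewrite Rabs_minus_sym, Hc, Rabs_mult, (Rabs_minus_sym x y).
    apply Rmult_le_compat_r; [apply Rabs_pos|apply Hb; lra]. }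
  destruct (Rtotal_order x y) as [Hxy|[Hxy|Hxy]]; auto.
  - subst. unfold Rminus. rewrite !Rplus_opp_r, Rabs_R0. lra.
  - rewrite Rabs_minus_sym, (Rabs_minus_sym x). auto.
Qed.

Lemma sin_lip x y : Rabs (sin x - sin y) <= Rabs (x - y).
Proof.
  rewrite <- (Rmult_1_l (Rabs (x - y))).
  apply (lip_on_of_deriv (Rmin x y) (Rmax x y) sin cos);
    try (split; [apply Rmin_l || apply Rmin_r|apply Rmax_l || apply Rmax_r]).
  - intros; apply derivable_pt_lim_sin.
  - intros. apply Rabs_le, COS_bound.
Qed.

Lemma cos_lip x y : Rabs (cos x - cos y) <= Rabs (x - y).
Proof.
  rewrite <- (Rmult_1_l (Rabs (x - y))).
  apply (lip_on_of_deriv (Rmin x y) (Rmax x y) cos (fun x => - sin x));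
    try (split; [apply Rmin_l || apply Rmin_r|apply Rmax_l || apply Rmax_r]).
  - intros; apply derivable_pt_lim_cos.
  - intros. rewrite Rabs_Ropp. apply Rabs_le, SIN_bound.
Qed.

Lemma loclip_continuity (g : R -> R) K dt : 0 <= K -> 0 < dt ->
  (forall s s', Rabs (s - s') <= dt -> Rabs (g s - g s') <= K * Rabs (s - s')) ->
  forall x, continuity_pt g x.
Proof.
  intros HK Hdt Hg x. unfold continuity_pt, continue_in, limit1_in, limit_in. intros eps Heps.
  exists (Rmin dt (eps / (K + 1))). split; [apply Rmin_glb_lt; auto; apply Rdiv_lt_0_compat; lra|].
  intros y [_ Hy]. simpl in *. unfold R_dist in *.
  pose proof (Rmin_l dt (eps / (K + 1))). pose proof (Rmin_r dt (eps / (K + 1))).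
  eapply Rle_lt_trans; [apply Hg; lra|].
  apply Rle_lt_trans with (K * (eps / (K + 1))); [apply Rmult_le_compat_l; lra|].
  apply Rmult_lt_reg_r with (K + 1); [lra|]. field_simplify; lra.
Qed.

Lemma derivable_continuity f x l : derivable_pt_lim f x l -> continuity_pt f x.
Proof. intros H. apply (derivable_continuous_pt f x (exist _ l H)). Qed.

Section Lipbnd.
Variables a b : R.

Lemma lipbnd_lip f : lipbnd a b f -> exists K, 0 <= K /\
  forall s s', a <= s <= b -> a <= s' <= b -> Rabs (f s - f s') <= K * Rabs (s - s').
Proof. intros [K [M [HK [HM [H1 H2]]]]]. eauto. Qed.

Lemma lipbnd_ext f g : lipbnd a b f -> (forall s, a <= s <= b -> g s = f s) -> lipbnd a b g.
Proof.
  intros [K [M [HK [HM [H1 H2]]]]] E. exists K, M; repeat split; auto.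
  - intros s s' Hs Hs'. rewrite !E by auto. auto.
  - intros s Hs. rewrite E by auto. auto.
Qed.

Lemma lipbnd_const k : lipbnd a b (fun _ => k).
Proof.
  exists 0, (Rabs k); repeat split; try lra; auto using Rabs_pos.
  - intros. unfold Rminus. rewrite Rplus_opp_r, Rabs_R0. lra.
  - intros. lra.
Qed.

Lemma lipbnd_plus f g : lipbnd a b f -> lipbnd a b g -> lipbnd a b (fun s => f s + g s).
Proof.
  intros [K [M [HK [HM [H1 H2]]]]] [K' [M' [HK' [HM' [H1' H2']]]]].
  exists (K + K'), (M + M'); repeat split; try lra.
  - intros s s' Hs Hs'. specialize (H1 s s' Hs Hs'). specialize (H1' s s' Hs Hs').
    replace (f s + g s - (f s' + g s')) with ((f s - f s') + (g s - g s')) by ring.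
    eapply Rle_trans; [apply Rabs_triang|]. lra.
  - intros s Hs. specialize (H2 s Hs). specialize (H2' s Hs).
    eapply Rle_trans; [apply Rabs_triang|]. lra.
Qed.

Lemma lipbnd_opp f : lipbnd a b f -> lipbnd a b (fun s => - f s).
Proof.
  intros [K [M [HK [HM [H1 H2]]]]]. exists K, M; repeat split; auto.
  - intros s s' Hs Hs'. replace (- f s - - f s') with (- (f s - f s')) by ring. rewrite Rabs_Ropp. auto.
  - intros s Hs. rewrite Rabs_Ropp. auto.
Qed.

Lemma lipbnd_minus f g : lipbnd a b f -> lipbnd a b g -> lipbnd a b (fun s => f s - g s).
Proof. intros. apply lipbnd_plus, lipbnd_opp; auto. Qed.

Lemma lipbnd_mult f g : lipbnd a b f -> lipbnd a b g -> lipbnd a b (fun s => f s * g s).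
Proof.
  intros [K [M [HK [HM [H1 H2]]]]] [K' [M' [HK' [HM' [H1' H2']]]]].
  exists (K * M' + M * K'), (M * M'); repeat split; try nra.
  - intros s s' Hs Hs'. specialize (H1 s s' Hs Hs'). specialize (H1' s s' Hs Hs').
    pose proof (H2 s Hs). pose proof (H2' s' Hs').
    replace (f s * g s - f s' * g s') with ((f s - f s') * g s' + f s * (g s - g s')) by ring.
    eapply Rle_trans; [apply Rabs_triang|]. rewrite !Rabs_mult.
    pose proof (Rabs_pos (f s - f s')). pose proof (Rabs_pos (g s - g s')).
    pose proof (Rabs_pos (g s')). pose proof (Rabs_pos (f s)). pose proof (Rabs_pos (s - s')).
    assert (Rabs (f s - f s') * Rabs (g s') <= K * Rabs (s - s') * M') by (apply Rmult_le_compat; auto).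
    assert (Rabs (f s) * Rabs (g s - g s') <= M * (K' * Rabs (s - s'))) by (apply Rmult_le_compat; auto).
    nra.
  - intros s Hs. rewrite Rabs_mult. apply Rmult_le_compat; auto using Rabs_pos.
Qed.

Lemma lipbnd_sin f : lipbnd a b f -> lipbnd a b (fun s => sin (f s)).
Proof.
  intros [K [M [HK [HM [H1 H2]]]]]. exists K, 1; repeat split; try lra.
  - intros s s' Hs Hs'. eapply Rle_trans; [apply sin_lip|auto].
  - intros. apply Rabs_le, SIN_bound.
Qed.

Lemma lipbnd_cos f : lipbnd a b f -> lipbnd a b (fun s => cos (f s)).
Proof.
  intros [K [M [HK [HM [H1 H2]]]]]. exists K, 1; repeat split; try lra.
  - intros s s' Hs Hs'. eapply Rle_trans; [apply cos_lip|auto].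
  - intros. apply Rabs_le, COS_bound.
Qed.

Lemma lipbnd_inv f m : 0 < m -> lipbnd a b f -> (forall s, a <= s <= b -> m <= f s) ->
  lipbnd a b (fun s => / f s).
Proof.
  intros Hm [K [M [HK [HM [H1 H2]]]]] Hl. exists (K / (m * m)), (/ m); repeat split.
  - apply Rmult_le_pos; auto. apply Rlt_le, Rinv_0_lt_compat; nra.
  - apply Rlt_le, Rinv_0_lt_compat; lra.
  - intros s s' Hs Hs'. pose proof (Hl s Hs). pose proof (Hl s' Hs').
    replace (/ f s - / f s') with ((f s' - f s) / (f s * f s')) by (field; lra).
    unfold Rdiv. rewrite Rabs_mult, Rabs_inv, (Rabs_pos_eq (f s * f s')) by nra.
    rewrite Rabs_minus_sym. specialize (H1 s s' Hs Hs').
    assert (/ (f s * f s') <= / (m * m)) by (apply Rinv_le_contravar; nra).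
    assert (0 < / (f s * f s')) by (apply Rinv_0_lt_compat; nra).
    pose proof (Rabs_pos (f s - f s')).
    apply Rle_trans with ((K * Rabs (s - s')) * / (m * m)); [apply Rmult_le_compat; lra|right; ring].
  - intros s Hs. pose proof (Hl s Hs). rewrite Rabs_inv, Rabs_pos_eq by lra.
    apply Rinv_le_contravar; lra.
Qed.

Lemma lipbnd_sqrt f m : 0 < m -> lipbnd a b f -> (forall s, a <= s <= b -> m <= f s) ->
  lipbnd a b (fun s => sqrt (f s)).
Proof.
  intros Hm [K [M [HK [HM [H1 H2]]]]] Hl. pose proof (sqrt_lt_R0 m Hm).
  exists (K / (2 * sqrt m)), (sqrt M); repeat split.
  - apply Rmult_le_pos; auto. apply Rlt_le, Rinv_0_lt_compat. lra.
  - apply sqrt_pos.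
  - intros s s' Hs Hs'. pose proof (Hl s Hs). pose proof (Hl s' Hs').
    pose proof (sqrt_le_1 m (f s) ltac:(lra) ltac:(lra) H0).
    pose proof (sqrt_le_1 m (f s') ltac:(lra) ltac:(lra) H3).
    replace (sqrt (f s) - sqrt (f s')) with ((f s - f s') / (sqrt (f s) + sqrt (f s'))).
    2:{ assert (E : (sqrt (f s) - sqrt (f s')) * (sqrt (f s) + sqrt (f s')) = f s - f s').
        { ring_simplify. rewrite <- !Rsqr_pow2, !Rsqr_sqrt by lra. ring. }
        rewrite <- E. field. lra. }
    unfold Rdiv. rewrite Rabs_mult, Rabs_inv, (Rabs_pos_eq (sqrt (f s) + sqrt (f s'))) by lra.
    specialize (H1 s s' Hs Hs').
    assert (/ (sqrt (f s) + sqrt (f s')) <= / (2 * sqrt m)) by (apply Rinv_le_contravar; lra).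
    assert (0 < / (sqrt (f s) + sqrt (f s'))) by (apply Rinv_0_lt_compat; lra).
    pose proof (Rabs_pos (f s - f s')).
    apply Rle_trans with ((K * Rabs (s - s')) * / (2 * sqrt m)); [apply Rmult_le_compat; lra|right; ring].
  - intros s Hs. rewrite Rabs_pos_eq by apply sqrt_pos. apply sqrt_le_1_alt.
    specialize (H2 s Hs). pose proof (Hl s Hs). rewrite Rabs_pos_eq in H2 by lra. auto.
Qed.

(* Extending a function on [a, b] by constants lets Stdlib's extreme value theorems, which are stated for
   functions continuous everywhere, apply. *)
Definition clamp (s : R) := Rmax a (Rmin b s).

Lemma clamp_in s : a <= b -> a <= clamp s <= b.
Proof. intros. unfold clamp, Rmax, Rmin. repeat destruct Rle_dec; lra. Qed.
Lemma clamp_id s : a <= s <= b -> clamp s = s.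
Proof. intros. unfold clamp, Rmax, Rmin. repeat destruct Rle_dec; lra. Qed.
Lemma clamp_lip s s' : Rabs (clamp s - clamp s') <= Rabs (s - s').
Proof. unfold clamp, Rmax, Rmin. repeat destruct Rle_dec; unfold Rabs; repeat destruct Rcase_abs; lra. Qed.

Lemma lipbnd_pos_lower_bound f : a <= b -> lipbnd a b f -> (forall s, a <= s <= b -> 0 < f s) ->
  exists m, 0 < m /\ forall s, a <= s <= b -> m <= f s.
Proof.
  intros Hab [K [M [HK [HM [H1 H2]]]]] Hp.
  assert (Hc : forall x, continuity_pt (fun s => f (clamp s)) x).
  { apply (loclip_continuity _ K 1 HK); [lra|]. intros s s' _.
    eapply Rle_trans; [apply H1; apply clamp_in; auto|].
    apply Rmult_le_compat_l; auto. apply clamp_lip. }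
  destruct (continuity_ab_min (fun s => f (clamp s)) a b Hab (fun x _ => Hc x)) as [x [Hx Hxi]].
  rewrite (clamp_id x) in Hx by auto.
  exists (f x). split; [auto|]. intros s Hs. specialize (Hx s Hs). rewrite clamp_id in Hx; auto.
Qed.

Lemma lipbnd_of_C1 f f' : a <= b -> (forall x, derivable_pt_lim f x (f' x)) ->
  (forall x, continuity_pt f' x) -> lipbnd a b f.
Proof.
  intros Hab Hd Hc.
  destruct (continuity_ab_maj (fun x => Rabs (f' x)) a b Hab) as [x1' [Hx1 _]].
  { intros x _. apply (continuity_pt_comp f' Rabs); auto. apply Rcontinuity_abs. }
  destruct (continuity_ab_maj (fun x => Rabs (f x)) a b Hab) as [x2' [Hx2 _]].
  { intros x _. apply (continuity_pt_comp f Rabs); [apply (derivable_continuity f x (f' x)); auto|].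
    apply Rcontinuity_abs. }
  exists (Rabs (f' x1')), (Rabs (f x2')); repeat split; auto using Rabs_pos.
  intros s s' Hs Hs'. apply (lip_on_of_deriv a b f f'); auto.
Qed.

End Lipbnd.

Lemma smooth_derivative f f' : smooth f -> (forall t, derivable_pt_lim f t (f' t)) -> smooth f'.
Proof.
  intros [D [H0 Hd]] Hf. exists (fun n => D (S n)). split; [|intros; apply Hd].
  intros t. apply (uniqueness_limite f t); auto.
  replace f with (D O) by (apply functional_extensionality; auto). apply Hd.
Qed.

Lemma smooth_derivable f : smooth f -> exists f', forall t, derivable_pt_lim f t (f' t).
Proof.
  intros [D [H0 Hd]]. exists (D 1%nat). intros t.
  replace f with (D O) by (apply functional_extensionality; auto). apply Hd.
Qed.

Lemma smooth_opp f : smooth f -> smooth (fun t => - f t).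
Proof.
  intros [D [H0 Hd]]. exists (fun n t => - D n t). split; [intros; rewrite H0; auto|].
  intros n t. apply (derivable_pt_lim_opp (D n)), Hd.
Qed.

Lemma smooth_lipbnd a b f : a <= b -> smooth f -> lipbnd a b f.
Proof.
  intros Hab [D [H0 Hd]]. apply (lipbnd_ext a b (D O)); [|intros; auto].
  apply (lipbnd_of_C1 a b (D O) (D 1%nat) Hab (Hd O)).
  intros x. apply (derivable_continuity _ _ _ (Hd 1%nat x)).
Qed.

Definition lipbnd3 (a b : R) (X : R -> R3) :=
  lipbnd a b (fun s => x1 (X s)) /\ lipbnd a b (fun s => x2 (X s)) /\ lipbnd a b (fun s => x3 (X s)).

Section Lipbnd3.
Variables a b : R.

Lemma lipbnd3_ext X Y : lipbnd3 a b X -> (forall s, a <= s <= b -> Y s = X s) -> lipbnd3 a b Y.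
Proof.
  intros [H1 [H2 H3]] E.
  split; [|split]; [eapply (lipbnd_ext a b (fun s => x1 (X s)))|eapply (lipbnd_ext a b (fun s => x2 (X s)))
    |eapply (lipbnd_ext a b (fun s => x3 (X s)))]; eauto; intros s Hs; rewrite (E s Hs); auto.
Qed.

Lemma lipbnd3_lip X : lipbnd3 a b X -> exists K, 0 <= K /\ forall s s', a <= s <= b -> a <= s' <= b ->
  vnorm (vsub (X s) (X s')) <= K * Rabs (s - s').
Proof.
  intros [H1 [H2 H3]]. destruct (lipbnd_lip _ _ _ H1) as [K1 [HK1 L1]].
  destruct (lipbnd_lip _ _ _ H2) as [K2 [HK2 L2]]. destruct (lipbnd_lip _ _ _ H3) as [K3 [HK3 L3]].
  exists (K1 + K2 + K3). split; [lra|]. intros s s' Hs Hs'.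
  eapply Rle_trans; [apply vnorm_comp_bound|]. unfold vsub; simpl.
  specialize (L1 s s' Hs Hs'). specialize (L2 s s' Hs Hs'). specialize (L3 s s' Hs Hs'). lra.
Qed.

Lemma lipbnd_dot X Y : lipbnd3 a b X -> lipbnd3 a b Y -> lipbnd a b (fun s => dot (X s) (Y s)).
Proof. intros [H1 [H2 H3]] [G1 [G2 G3]]. unfold dot. repeat apply lipbnd_plus; apply lipbnd_mult; auto. Qed.

Lemma lipbnd3_cross X Y : lipbnd3 a b X -> lipbnd3 a b Y -> lipbnd3 a b (fun s => cross (X s) (Y s)).
Proof. intros [H1 [H2 H3]] [G1 [G2 G3]]. unfold cross; simpl. repeat split; apply lipbnd_minus; apply lipbnd_mult; auto. Qed.

Lemma lipbnd3_vadd X Y : lipbnd3 a b X -> lipbnd3 a b Y -> lipbnd3 a b (fun s => vadd (X s) (Y s)).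
Proof. intros [H1 [H2 H3]] [G1 [G2 G3]]. unfold vadd; simpl. repeat split; apply lipbnd_plus; auto. Qed.

Lemma lipbnd3_vsub X Y : lipbnd3 a b X -> lipbnd3 a b Y -> lipbnd3 a b (fun s => vsub (X s) (Y s)).
Proof. intros [H1 [H2 H3]] [G1 [G2 G3]]. unfold vsub; simpl. repeat split; apply lipbnd_minus; auto. Qed.

Lemma lipbnd3_vscale k X : lipbnd a b k -> lipbnd3 a b X -> lipbnd3 a b (fun s => vscale (k s) (X s)).
Proof. intros Hk [H1 [H2 H3]]. unfold vscale; simpl. repeat split; apply lipbnd_mult; auto. Qed.

End Lipbnd3.

Lemma derivative_zero_of_const_on a b f t l : a < b -> a <= t <= b ->
  (forall s, a <= s <= b -> f s = f t) -> derivable_pt_lim f t l -> l = 0.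
Proof.
  intros Hab Ht Hc Hd. apply Rabs_eq_0. apply Rle_antisym; [|apply Rabs_pos].
  apply Rnot_lt_le. intros Hl. destruct (Hd (Rabs l) Hl) as [[d Hdp] Hdd]. simpl in Hdd.
  set (h := Rmin (d / 2) ((b - a) / 2)).
  assert (0 < h) by (unfold h; apply Rmin_glb_lt; lra).
  assert (h <= d / 2) by apply Rmin_l. assert (h <= (b - a) / 2) by apply Rmin_r.
  (* step towards the interior of [a, b] *)
  destruct (Rle_lt_dec t ((a + b) / 2)) as [Hm|Hm].
  - specialize (Hdd h ltac:(lra) ltac:(rewrite Rabs_pos_eq; lra)).
    rewrite (Hc (t + h)) in Hdd by lra. replace ((f t - f t) / h - l) with (- l) in Hdd by (field; lra).
    rewrite Rabs_Ropp in Hdd; lra.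
  - specialize (Hdd (- h) ltac:(lra) ltac:(rewrite Rabs_Ropp, Rabs_pos_eq; lra)).
    rewrite (Hc (t + - h)) in Hdd by lra. replace ((f t - f t) / - h - l) with (- l) in Hdd by (field; lra).
    rewrite Rabs_Ropp in Hdd; lra.
Qed.

Lemma derivable_pt_lim_approx f x l : derivable_pt_lim f x l -> forall eta, 0 < eta -> exists d, 0 < d /\
  forall y, Rabs (y - x) < d -> Rabs (f y - f x - l * (y - x)) <= eta * Rabs (y - x).
Proof.
  intros Hd eta Heta. destruct (Hd eta Heta) as [[d Hdp] Hdd]. exists d. split; auto.
  intros y Hy. destruct (Req_dec y x) as [E|E].
  - subst. unfold Rminus. rewrite !Rplus_opp_r, Rmult_0_r, Rplus_opp_r, Rabs_R0. lra.
  - specialize (Hdd (y - x) ltac:(lra) Hy). replace (x + (y - x)) with y in Hdd by ring.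
    replace (f y - f x - l * (y - x)) with (((f y - f x) / (y - x) - l) * (y - x)) by (field; lra).
    rewrite Rabs_mult. apply Rmult_le_compat_r; [apply Rabs_pos|lra].
Qed.

Lemma dlim_eq f t l l' : derivable_pt_lim f t l -> l = l' -> derivable_pt_lim f t l'.
Proof. intros; subst; auto. Qed.
Lemma dlim_mult f g t a b : derivable_pt_lim f t a -> derivable_pt_lim g t b ->
  derivable_pt_lim (fun s => f s * g s) t (a * g t + f t * b).
Proof. intros. apply (derivable_pt_lim_mult f g); auto. Qed.
Lemma dlim_plus f g t a b : derivable_pt_lim f t a -> derivable_pt_lim g t b ->
  derivable_pt_lim (fun s => f s + g s) t (a + b).
Proof. intros. apply (derivable_pt_lim_plus f g); auto. Qed.
Lemma dlim_minus f g t a b : derivable_pt_lim f t a -> derivable_pt_lim g t b ->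
  derivable_pt_lim (fun s => f s - g s) t (a - b).
Proof. intros. apply (derivable_pt_lim_minus f g); auto. Qed.

Lemma deriv3_dot U U' V V' t : deriv3 U U' t -> deriv3 V V' t ->
  derivable_pt_lim (fun s => dot (U s) (V s)) t (dot (U' t) (V t) + dot (U t) (V' t)).
Proof.
  intros [H1 [H2 H3]] [G1 [G2 G3]]. unfold dot.
  eapply dlim_eq; [apply dlim_plus; [apply dlim_plus|]; apply dlim_mult; eauto|]. simpl; ring.
Qed.

Lemma deriv3_dot_const m U U' t : deriv3 U U' t ->
  derivable_pt_lim (fun s => dot m (U s)) t (dot m (U' t)).
Proof.
  intros [H1 [H2 H3]]. unfold dot.
  eapply dlim_eq; [apply dlim_plus; [apply dlim_plus|]; apply dlim_mult; eauto using derivable_pt_lim_const|].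
  simpl; ring.
Qed.

Lemma deriv3_cross U U' V V' t : deriv3 U U' t -> deriv3 V V' t ->
  deriv3 (fun s => cross (U s) (V s)) (fun s => vadd (cross (U' s) (V s)) (cross (U s) (V' s))) t.
Proof.
  intros [H1 [H2 H3]] [G1 [G2 G3]]. unfold cross, vadd; simpl.
  split; [|split]; (eapply dlim_eq; [apply dlim_minus; apply dlim_mult; eauto|]); simpl; ring.
Qed.

Lemma deriv3_scale k k' U U' t : derivable_pt_lim k t k' -> deriv3 U U' t ->
  deriv3 (fun s => vscale (k s) (U s)) (fun s => vadd (vscale k' (U s)) (vscale (k s) (U' s))) t.
Proof.
  intros Hk [H1 [H2 H3]]. unfold vscale, vadd; simpl.
  split; [|split]; (eapply dlim_eq; [apply dlim_mult; eauto|]); simpl; ring.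
Qed.

Lemma deriv3_vadd U U' V V' t : deriv3 U U' t -> deriv3 V V' t ->
  deriv3 (fun s => vadd (U s) (V s)) (fun s => vadd (U' s) (V' s)) t.
Proof.
  intros [H1 [H2 H3]] [G1 [G2 G3]]. unfold vadd; simpl.
  split; [|split]; apply derivable_pt_lim_plus; auto.
Qed.

Lemma taylor_lip a b f f' K : (forall x, a <= x <= b -> derivable_pt_lim f x (f' x)) ->
  (forall s s', a <= s <= b -> a <= s' <= b -> Rabs (f' s - f' s') <= K * Rabs (s - s')) -> 0 <= K ->
  forall s s', a <= s <= b -> a <= s' <= b ->
  Rabs (f s - f s' - (s - s') * f' s') <= K * ((s - s') * (s - s')).
Proof.
  intros Hd HL HK s s' Hs Hs'.
  set (g := fun x => f x - x * f' s').
  assert (Hg : forall x, a <= x <= b -> derivable_pt_lim g x (f' x - f' s')).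
  { intros x Hx. unfold g. eapply dlim_eq.
    - apply dlim_minus; [apply Hd; auto|apply dlim_mult; [apply derivable_pt_lim_id|apply derivable_pt_lim_const]].
    - simpl; ring. }
  assert (Hb : forall x, Rmin s s' <= x <= Rmax s s' -> Rabs (f' x - f' s') <= K * Rabs (s - s')).
  { intros x Hx. assert (Hx' : s <= x <= s' \/ s' <= x <= s)
      by (unfold Rmin, Rmax in Hx; destruct (Rle_dec s s'); lra).
    eapply Rle_trans; [apply HL; lra|].
    apply Rmult_le_compat_l; auto. unfold Rabs; repeat destruct Rcase_abs; lra. }
  assert (Hmm : a <= Rmin s s' /\ Rmax s s' <= b) by (split; [apply Rmin_glb|apply Rmax_lub]; lra).
  replace (f s - f s' - (s - s') * f' s') with (g s - g s') by (unfold g; ring).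
  replace (K * ((s - s') * (s - s'))) with (K * Rabs (s - s') * Rabs (s - s'))
    by (rewrite Rmult_assoc, <- Rabs_mult, Rabs_pos_eq by apply sq_nonneg; ring).
  apply (lip_on_of_deriv (Rmin s s') (Rmax s s') g (fun x => f' x - f' s'));
    [intros x Hx; apply Hg; lra|exact Hb| |];
    split; try apply Rmin_l; try apply Rmin_r; try apply Rmax_l; try apply Rmax_r.
Qed.

(** * Locally near-isometric self-maps of an interval are onto *)

Section NearIsometric.
Variables (a b : R) (h : R -> R).
Hypothesis Hab : a < b.
Hypothesis Hh : forall t, a <= t <= b -> a <= h t <= b.
Hypothesis Hnear : forall theta, 0 < theta <= 1/10 -> exists dt, 0 < dt /\
  forall x y, a <= x <= b -> a <= y <= b -> Rabs (x - y) <= dt ->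
    (1 - theta) * Rabs (x - y) <= (1 + theta) * Rabs (h x - h y) /\
    (1 - theta) * Rabs (h x - h y) <= (1 + theta) * Rabs (x - y).

(* Two consecutive increments of length about d cannot cancel, since their sum must have length about 2 d. *)
Lemma near_isometric_increments_same_sign theta dt x d : 0 < theta <= 1/10 ->
  (forall x y, a <= x <= b -> a <= y <= b -> Rabs (x - y) <= dt ->
    (1 - theta) * Rabs (x - y) <= (1 + theta) * Rabs (h x - h y) /\
    (1 - theta) * Rabs (h x - h y) <= (1 + theta) * Rabs (x - y)) ->
  0 < d -> 2 * d <= dt -> a <= x -> x + 2 * d <= b ->
  0 < (h (x + d) - h x) * (h (x + 2 * d) - h (x + d)).
Proof.
  intros Hth Hr Hd Hdd Hx Hx2.
  assert (I1 : a <= x <= b) by lra. assert (I2 : a <= x + d <= b) by lra. assert (I3 : a <= x + 2 * d <= b) by lra.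
  assert (Ed : Rabs (x + d - x) = d) by (replace (x + d - x) with d by ring; apply Rabs_pos_eq; lra).
  assert (Ed' : Rabs (x + 2 * d - (x + d)) = d)
    by (replace (x + 2 * d - (x + d)) with d by ring; apply Rabs_pos_eq; lra).
  assert (E2d : Rabs (x + 2 * d - x) = 2 * d)
    by (replace (x + 2 * d - x) with (2 * d) by ring; apply Rabs_pos_eq; lra).
  destruct (Hr (x + d) x I2 I1 ltac:(lra)) as [Ra Ra'].
  destruct (Hr (x + 2 * d) (x + d) I3 I2 ltac:(lra)) as [Rb Rb'].
  destruct (Hr (x + 2 * d) x I3 I1 ltac:(lra)) as [Rc _].
  rewrite Ed in Ra, Ra'. rewrite Ed' in Rb, Rb'. rewrite E2d in Rc.
  set (A := h (x + d) - h x) in *. set (B := h (x + 2 * d) - h (x + d)) in *.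
  replace (h (x + 2 * d) - h x) with (A + B) in Rc by (unfold A, B; ring).
  pose proof (Rabs_pos A). pose proof (Rabs_pos B). pose proof (Rabs_pos (A + B)).
  assert (9 / 10 * d <= 11 / 10 * Rabs A) by nra.
  assert (9 / 10 * Rabs A <= 11 / 10 * d) by nra.
  assert (9 / 10 * d <= 11 / 10 * Rabs B) by nra.
  assert (9 / 10 * Rabs B <= 11 / 10 * d) by nra.
  assert (9 / 10 * (2 * d) <= 11 / 10 * Rabs (A + B)) by nra.
  apply Rnot_le_lt. intros Hle.
  unfold Rabs in *. destruct (Rcase_abs A); destruct (Rcase_abs B); destruct (Rcase_abs (A + B)); nra.
Qed.

Lemma near_isometric_grid_step theta dt d :
  (forall x y, a <= x <= b -> a <= y <= b -> Rabs (x - y) <= dt ->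
    (1 - theta) * Rabs (x - y) <= (1 + theta) * Rabs (h x - h y) /\
    (1 - theta) * Rabs (h x - h y) <= (1 + theta) * Rabs (x - y)) ->
  0 < d -> 2 * d <= dt -> forall k : nat, a + INR (S k) * d <= b ->
  (1 - theta) * d <= (1 + theta) * Rabs (h (a + INR (S k) * d) - h (a + INR k * d)).
Proof.
  intros Hr Hd Hdd k Hk. pose proof (pos_INR k). rewrite S_INR in *.
  assert (Ed : Rabs (a + (INR k + 1) * d - (a + INR k * d)) = d)
    by (replace (a + (INR k + 1) * d - (a + INR k * d)) with d by ring; apply Rabs_pos_eq; lra).
  destruct (Hr (a + (INR k + 1) * d) (a + INR k * d) ltac:(nra) ltac:(nra) ltac:(lra)) as [R1 _].
  rewrite Ed in R1. exact R1.
Qed.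

(* Along a grid of step d all increments of h have the sign of the first one, so their lengths add up. *)
Lemma near_isometric_grid theta dt d : 0 < theta <= 1/10 ->
  (forall x y, a <= x <= b -> a <= y <= b -> Rabs (x - y) <= dt ->
    (1 - theta) * Rabs (x - y) <= (1 + theta) * Rabs (h x - h y) /\
    (1 - theta) * Rabs (h x - h y) <= (1 + theta) * Rabs (x - y)) ->
  0 < d -> 2 * d <= dt -> forall j : nat, a + INR (S j) * d <= b ->
  0 < (h (a + INR (S j) * d) - h (a + INR j * d)) * (h (a + d) - h a) /\
  INR (S j) * ((1 - theta) * d) * Rabs (h (a + d) - h a) <=
    (1 + theta) * ((h (a + INR (S j) * d) - h a) * (h (a + d) - h a)).
Proof.
  intros Hth Hr Hd Hdd. pose proof (near_isometric_grid_step theta dt d Hr Hd Hdd) as Hstep.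
  set (A0 := h (a + d) - h a).
  induction j as [|j IH]; intros Hj.
  - pose proof (Hstep O Hj) as H. simpl in H |- *. rewrite Rmult_0_l, Rplus_0_r, Rmult_1_l in *. fold A0 in H |- *.
    assert (HA0 : 0 < Rabs A0) by nra.
    assert (A0 <> 0) by (intro Hz; rewrite Hz, Rabs_R0 in HA0; lra).
    split; [apply Rsqr_pos_lt; auto|].
    replace (A0 * A0) with (Rabs A0 * Rabs A0) by (rewrite <- Rabs_mult, Rabs_pos_eq; [ring|apply sq_nonneg]).
    pose proof (Rabs_pos A0). nra.
  - assert (Hj' : a + INR (S j) * d <= b) by (rewrite (S_INR (S j)) in Hj; lra).
    destruct (IH Hj') as [IH1 IH2].
    set (x := a + INR j * d).
    assert (E1 : a + INR (S j) * d = x + d) by (unfold x; rewrite S_INR; ring).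
    assert (E2 : a + INR (S (S j)) * d = x + 2 * d) by (unfold x; rewrite !S_INR; ring).
    pose proof (pos_INR j).
    pose proof (near_isometric_increments_same_sign theta dt x d Hth Hr Hd Hdd ltac:(unfold x; nra)
      ltac:(rewrite <- E2; lra)) as Tr.
    rewrite <- E1, <- E2 in Tr. fold x in IH1.
    set (D1 := h (a + INR (S j) * d) - h x) in *. set (D2 := h (a + INR (S (S j)) * d) - h (a + INR (S j) * d)).
    assert (S1 : 0 < D2 * A0).
    { assert (0 < D1 * D1) by (apply Rsqr_pos_lt; intro Hz; rewrite Hz in IH1; lra).
      assert (0 < (D1 * D1) * (D2 * A0)) by (replace ((D1 * D1) * (D2 * A0)) with ((D1 * D2) * (D1 * A0)) by ring;
        apply Rmult_lt_0_compat; auto).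
      nra. }
    split; auto.
    pose proof (Hstep (S j) Hj) as Hs. fold D2 in Hs.
    assert (E3 : D2 * A0 = Rabs D2 * Rabs A0) by (rewrite <- Rabs_mult, Rabs_pos_eq; lra).
    replace (h (a + INR (S (S j)) * d) - h a) with (D2 + (h (a + INR (S j) * d) - h a)) by (unfold D2; ring).
    rewrite (S_INR (S j)). pose proof (Rabs_pos A0). pose proof (Rabs_pos D2).
    assert ((1 - theta) * d * Rabs A0 <= (1 + theta) * Rabs D2 * Rabs A0) by (apply Rmult_le_compat_r; lra).
    nra.
Qed.

Lemma near_isometric_endpoints_approx theta : 0 < theta <= 1/10 ->
  (1 - theta) * (b - a) <= (1 + theta) * Rabs (h b - h a).
Proof.
  intros Hth. destruct (Hnear theta Hth) as [dt [Hdt Hr]].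
  destruct (INR_unbounded (2 * (b - a) / dt)) as [N0 HN0].
  assert (0 <= 2 * (b - a) / dt) by (apply Rdiv_le_0_compat; lra).
  set (N := S N0). set (d := (b - a) / INR N).
  assert (HN : 0 < INR N) by (unfold N; rewrite S_INR; pose proof (pos_INR N0); lra).
  assert (Hd : 0 < d) by (unfold d; apply Rdiv_lt_0_compat; lra).
  assert (Hdd : 2 * d <= dt).
  { assert (Hlt : 2 * (b - a) < dt * INR N).
    { apply Rmult_lt_reg_r with (/ dt); [apply Rinv_0_lt_compat; lra|].
      replace (dt * INR N * / dt) with (INR N) by (field; lra). unfold N. rewrite S_INR.
      unfold Rdiv in HN0. lra. }
    unfold d. apply Rmult_le_reg_r with (INR N); auto.
    replace (2 * ((b - a) / INR N) * INR N) with (2 * (b - a)) by (field; lra). lra. }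
  assert (HNd : a + INR N * d = b) by (unfold d; field; lra).
  destruct (near_isometric_grid theta dt d Hth Hr Hd Hdd N0 ltac:(fold N; lra)) as [_ Hfin].
  fold N in Hfin. rewrite HNd in Hfin.
  replace (INR N * ((1 - theta) * d)) with ((1 - theta) * (b - a)) in Hfin by (unfold d; field; lra).
  set (A0 := h (a + d) - h a) in *.
  assert (HA0 : 0 < Rabs A0).
  { destruct (near_isometric_grid theta dt d Hth Hr Hd Hdd O) as [H0 _].
    { simpl. assert (INR N0 * d >= 0) by (pose proof (pos_INR N0); nra).
      unfold N in HNd. rewrite S_INR in HNd. lra. }
    simpl in H0. rewrite Rmult_0_l, Rplus_0_r, Rmult_1_l in H0. fold A0 in H0.
    apply Rabs_pos_lt. intro Hz. rewrite Hz in H0. lra. }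
  assert ((h b - h a) * A0 <= Rabs (h b - h a) * Rabs A0) by (rewrite <- Rabs_mult; apply Rle_abs).
  apply Rmult_le_reg_r with (Rabs A0); auto. nra.
Qed.

Lemma near_isometric_endpoints : b - a <= Rabs (h b - h a).
Proof.
  apply Rnot_lt_le. intros Hlt. set (L := Rabs (h b - h a)) in *. pose proof (Rabs_pos (h b - h a)).
  set (theta := Rmin (1/10) ((b - a - L) / (4 * (b - a)))).
  assert (Hth : 0 < theta <= 1/10)
    by (unfold theta; split; [apply Rmin_glb_lt; [lra|apply Rdiv_lt_0_compat; lra]|apply Rmin_l]).
  assert (Hth2 : theta * (4 * (b - a)) <= b - a - L).
  { apply Rle_trans with ((b - a - L) / (4 * (b - a)) * (4 * (b - a))).
    - apply Rmult_le_compat_r; [lra|apply Rmin_r].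
    - right; field; lra. }
  pose proof (near_isometric_endpoints_approx theta Hth). fold L in H0. nra.
Qed.

Lemma near_isometric_onto s : a <= s <= b -> exists t, a <= t <= b /\ h t = s.
Proof.
  intros Hs. destruct (Hnear (1/10) ltac:(lra)) as [dt [Hdt Hr]].
  set (ht := fun t => h (clamp a b t)).
  assert (Hcont : forall x, continuity_pt ht x).
  { apply (loclip_continuity ht (11/9) dt); [lra|auto|].
    intros u w Huw. unfold ht. pose proof (clamp_lip a b u w).
    pose proof (clamp_in a b u ltac:(lra)). pose proof (clamp_in a b w ltac:(lra)).
    destruct (Hr (clamp a b u) (clamp a b w) H0 H1 ltac:(lra)) as [_ R2].
    pose proof (Rabs_pos (h (clamp a b u) - h (clamp a b w))). lra. }
  pose proof near_isometric_endpoints as Hfull.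
  pose proof (Hh a ltac:(lra)) as Ha. pose proof (Hh b ltac:(lra)) as Hb.
  destruct (IVT_cor (fun t => ht t - s) a b) as [z [Hz Hz0]].
  - intros x. apply continuity_pt_minus; auto. apply continuity_pt_const. intros ??; auto.
  - lra.
  - unfold ht. rewrite !clamp_id by lra.
    unfold Rabs in Hfull. destruct (Rcase_abs (h b - h a)).
    + assert (Eb : h b = a) by lra. assert (Ea : h a = b) by lra. rewrite Ea, Eb. nra.
    + assert (Eb : h b = b) by lra. assert (Ea : h a = a) by lra. rewrite Ea, Eb. nra.
  - exists z. split; auto. unfold ht in Hz0. rewrite clamp_id in Hz0 by auto. lra.
Qed.

End NearIsometric.

Lemma lip_mul_deriv_approx a b (u A : R -> R) s0 A' K : 0 <= K ->
  (forall s, a <= s <= b -> Rabs (u s - u s0) <= K * Rabs (s - s0)) -> (forall s, Rabs (u s) <= 1) ->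
  derivable_pt_lim A s0 A' -> A s0 = 0 -> forall eta, 0 < eta -> exists d, 0 < d /\
  forall s, a <= s <= b -> Rabs (s - s0) < d ->
  Rabs (u s * A s - u s0 * A' * (s - s0)) <= eta * Rabs (s - s0).
Proof.
  intros HK Hu Hu1 HA HA0 eta Heta.
  destruct (derivable_pt_lim_approx _ _ _ HA (eta / 2) ltac:(lra)) as [d [Hd Hd']].
  set (C := K * Rabs A' + 1). assert (HC : 0 < C) by (unfold C; pose proof (Rabs_pos A'); nra).
  exists (Rmin d (eta / (2 * C))). split; [apply Rmin_glb_lt; [lra|apply Rdiv_lt_0_compat; lra]|].
  intros s Hs Hss. pose proof (Rmin_l d (eta / (2 * C))). pose proof (Rmin_r d (eta / (2 * C))).
  specialize (Hd' s ltac:(lra)). rewrite HA0, Rminus_0_r in Hd'.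
  replace (u s * A s - u s0 * A' * (s - s0)) with (u s * (A s - A' * (s - s0)) + (u s - u s0) * A' * (s - s0)) by ring.
  eapply Rle_trans; [apply Rabs_triang|]. rewrite !Rabs_mult.
  pose proof (Rabs_pos (s - s0)). pose proof (Rabs_pos A'). pose proof (Rabs_pos (u s - u s0)).
  pose proof (Rabs_pos (A s - A' * (s - s0))). pose proof (Hu1 s). pose proof (Hu s Hs).
  assert (Rabs (s - s0) * (K * Rabs A') <= eta / 2).
  { apply Rle_trans with (eta / (2 * C) * C); [apply Rmult_le_compat; try lra; unfold C; try lra; nra|right; field; lra]. }
  assert (Rabs (u s) * Rabs (A s - A' * (s - s0)) <= eta / 2 * Rabs (s - s0)) by nra.
  assert (Rabs (u s - u s0) * Rabs A' <= K * Rabs (s - s0) * Rabs A') by (apply Rmult_le_compat_r; auto).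
  nra.
Qed.

Lemma strip_sub (c ce cdd : R -> R3) al be al' be' s s' w w' :
  vsub (strip c ce cdd al be s w) (strip c ce cdd al' be' s' w') =
  vadd (vadd (vadd (vscale (s - s') (ce s'))
                   (vsub (vscale w (ruling ce cdd al be s')) (vscale w' (ruling ce cdd al' be' s'))))
             (vsub (vsub (c s) (c s')) (vscale (s - s') (ce s'))))
       (vscale w (vsub (ruling ce cdd al be s) (ruling ce cdd al be s'))).
Proof. apply R3_ext; unfold strip; vunfold; ring. Qed.

Lemma curve_perturbation_lower_bound (c ce X : R -> R3) K Kx q s s' w N Lin :
  0 <= K -> 0 <= Kx -> 0 < q ->
  vnorm (vsub (vsub (c s) (c s')) (vscale (s - s') (ce s'))) <= K * ((s - s') * (s - s')) ->
  vnorm (vsub (X s) (X s')) <= Kx * Rabs (s - s') ->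
  Rabs (s - s') <= q / (4 * (K + 1)) -> Rabs w <= q / (4 * (Kx + 1)) ->
  Rabs (s - s') <= N -> q * N <= vnorm Lin ->
  q / 2 * N <= vnorm (vadd (vadd Lin (vsub (vsub (c s) (c s')) (vscale (s - s') (ce s'))))
                           (vscale w (vsub (X s) (X s')))).
Proof.
  intros HK HKx Hq HR HX Hss Hw HN HL.
  set (D := Rabs (s - s')) in *. pose proof (Rabs_pos (s - s')) as HD. fold D in HD.
  replace ((s - s') * (s - s')) with (D * D) in HR
    by (unfold D; rewrite <- Rabs_mult, Rabs_pos_eq; [ring|apply sq_nonneg]).
  pose proof (vnorm_rev_triangle (vadd Lin (vsub (vsub (c s) (c s')) (vscale (s - s') (ce s'))))
    (vscale w (vsub (X s) (X s')))) as T1.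
  pose proof (vnorm_rev_triangle Lin (vsub (vsub (c s) (c s')) (vscale (s - s') (ce s')))) as T2.
  rewrite vnorm_scale in T1.
  assert (E1 : K * (D * D) <= q / 4 * N).
  { assert (K * D <= q / 4).
    { apply Rle_trans with (K * (q / (4 * (K + 1)))); [apply Rmult_le_compat_l; auto|].
      replace (q / (4 * (K + 1))) with (q / 4 / (K + 1)) by (field; lra). apply mul_div_succ_le; lra. }
    replace (K * (D * D)) with (K * D * D) by ring. apply Rmult_le_compat; nra. }
  assert (E2 : Rabs w * vnorm (vsub (X s) (X s')) <= q / 4 * N).
  { apply Rle_trans with (q / (4 * (Kx + 1)) * (Kx * D)); [apply Rmult_le_compat; auto using Rabs_pos, vnorm_ge0|].
    replace (q / (4 * (Kx + 1)) * (Kx * D)) with (Kx * (q / 4 / (Kx + 1)) * D) by (field; lra).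
    assert (0 <= q / 4 / (Kx + 1)) by (apply Rdiv_le_0_compat; lra).
    pose proof (mul_div_succ_le Kx (q / 4) HKx ltac:(lra)).
    apply Rmult_le_compat; nra. }
  lra.
Qed.

Lemma far_points_apart A B X Y w w' : vnorm X = 1 -> vnorm Y = 1 ->
  vnorm (vsub A B) - Rabs w - Rabs w' <= vnorm (vsub (vadd A (vscale w X)) (vadd B (vscale w' Y))).
Proof.
  intros HX HY.
  replace (vsub (vadd A (vscale w X)) (vadd B (vscale w' Y))) with (vadd (vsub A B) (vadd (vscale w X) (vscale (- w') Y)))
    by (apply R3_ext; vunfold; ring).
  pose proof (vnorm_rev_triangle (vsub A B) (vadd (vscale w X) (vscale (- w') Y))).
  pose proof (vnorm_triangle (vscale w X) (vscale (- w') Y)). rewrite !vnorm_scale, HX, HY, Rabs_Ropp in H0. lra.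
Qed.

Lemma le_abs_of_le_sq x sg : Rabs x <= 1 -> sg <= x * x -> sg <= Rabs x.
Proof.
  intros H1 H. replace (x * x) with (Rabs x * Rabs x) in H by (rewrite <- Rabs_mult, Rabs_pos_eq; [ring|apply sq_nonneg]).
  pose proof (Rabs_pos x). nra.
Qed.

(* The hypotheses bound the components along e, n, b of x e + w xi' - w' xi, where xi and xi' are the rulings
   of two strips with opposite first angles. *)
Lemma dual_components_lower_bound x w w' cb cb' sb sb' ca sa sg N :
  0 < sg <= 1 -> sg <= sb -> sg <= sb' -> sg <= ca -> sg <= Rabs sa -> Rabs cb <= 1 -> Rabs cb' <= 1 ->
  Rabs (x + w * cb' - w' * cb) <= N -> ca * Rabs (w * sb' - w' * sb) <= N ->
  Rabs sa * Rabs (w * sb' + w' * sb) <= N ->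
  sg * sg / 5 * (Rabs x + Rabs w + Rabs w') <= N.
Proof.
  intros Hsg Hb Hb' Hca Hsa Hcb Hcb' Be Bn Bb.
  set (P := w * sb'). set (Q := w' * sb). fold P Q in Bn, Bb.
  pose proof (Rabs_pos (P - Q)). pose proof (Rabs_pos (P + Q)).
  assert (H1 : sg * Rabs (P - Q) <= N) by (apply Rle_trans with (ca * Rabs (P - Q)); [apply Rmult_le_compat_r|]; lra).
  assert (H2 : sg * Rabs (P + Q) <= N) by (apply Rle_trans with (Rabs sa * Rabs (P + Q)); [apply Rmult_le_compat_r|]; lra).
  assert (HPQ : 2 * Rabs P <= Rabs (P - Q) + Rabs (P + Q) /\ 2 * Rabs Q <= Rabs (P - Q) + Rabs (P + Q)).
  { split; unfold Rabs; repeat destruct Rcase_abs; lra. }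
  assert (HP : sg * Rabs P <= N) by nra. assert (HQ : sg * Rabs Q <= N) by nra.
  pose proof (Rabs_pos w). pose proof (Rabs_pos w'). pose proof (Rabs_pos x).
  assert (Hw : sg * sg * Rabs w <= N).
  { unfold P in HP. rewrite Rabs_mult, (Rabs_pos_eq sb') in HP by lra.
    assert (sg * Rabs w <= sb' * Rabs w) by (apply Rmult_le_compat_r; lra). nra. }
  assert (Hw' : sg * sg * Rabs w' <= N).
  { unfold Q in HQ. rewrite Rabs_mult, (Rabs_pos_eq sb) in HQ by lra.
    assert (sg * Rabs w' <= sb * Rabs w') by (apply Rmult_le_compat_r; lra). nra. }
  assert (Hx : Rabs x <= N + Rabs w + Rabs w').
  { assert (Rabs (w * cb') <= Rabs w) by (rewrite Rabs_mult; nra).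
    assert (Rabs (w' * cb) <= Rabs w') by (rewrite Rabs_mult; nra).
    replace x with ((x + w * cb' - w' * cb) - w * cb' + w' * cb) at 1 by ring.
    eapply Rle_trans; [apply Rabs_triang|]. unfold Rminus.
    eapply Rle_trans; [apply Rplus_le_compat_r; apply Rabs_triang|]. rewrite Rabs_Ropp. unfold Rminus in Be. lra. }
  assert (sg * sg <= 1) by nra.
  assert (sg * sg * Rabs x <= sg * sg * (N + Rabs w + Rabs w')) by (apply Rmult_le_compat_l; nra).
  assert (0 <= N) by (pose proof (Rabs_pos (x + w * cb' - w' * cb)); lra). nra.
Qed.

(* The components X, Y, Z of a unit vector on an orthonormal frame cannot all be small against
   the tangent and the two rulings cos b e + sin b (cos a n +- sin a b). *)
Lemma frame_components_not_small X Y Z ca sa cb sb cb' sb' sg :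
  X * X + Y * Y + Z * Z = 1 -> 0 < sg <= 1 -> sg <= sb -> sg <= sb' -> sg <= ca -> sg <= Rabs sa ->
  Rabs cb <= 1 -> Rabs cb' <= 1 ->
  Rabs X <= 2 * (sg * sg / 10) ->
  Rabs (cb * X + sb * (ca * Y + sa * Z)) <= sg * sg / 10 ->
  Rabs (cb' * X + sb' * (ca * Y - sa * Z)) <= sg * sg / 10 -> False.
Proof.
  intros Par Hsg Hb Hb' Hca Hsa Hcb Hcb' BX B1 B2. set (eta := sg * sg / 10) in *.
  set (P := ca * Y + sa * Z) in *. set (Q := ca * Y - sa * Z) in *.
  assert (Hc : forall cbx, Rabs cbx <= 1 -> Rabs (cbx * X) <= 2 * eta).
  { intros cbx Hx. rewrite Rabs_mult. pose proof (Rabs_pos X). pose proof (Rabs_pos cbx). nra. }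
  assert (HP : sg * Rabs P <= 3 * eta).
  { pose proof (Hc cb Hcb). pose proof (Rabs_triang (cb * X + sb * P) (- (cb * X))).
    rewrite Rabs_Ropp in H0. replace (cb * X + sb * P + - (cb * X)) with (sb * P) in H0 by ring.
    rewrite Rabs_mult, (Rabs_pos_eq sb) in H0 by lra.
    assert (sg * Rabs P <= sb * Rabs P) by (apply Rmult_le_compat_r; auto using Rabs_pos). lra. }
  assert (HQ : sg * Rabs Q <= 3 * eta).
  { pose proof (Hc cb' Hcb'). pose proof (Rabs_triang (cb' * X + sb' * Q) (- (cb' * X))).
    rewrite Rabs_Ropp in H0. replace (cb' * X + sb' * Q + - (cb' * X)) with (sb' * Q) in H0 by ring.
    rewrite Rabs_mult, (Rabs_pos_eq sb') in H0 by lra.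
    assert (sg * Rabs Q <= sb' * Rabs Q) by (apply Rmult_le_compat_r; auto using Rabs_pos). lra. }
  assert (HPQ : Rabs (P + Q) <= Rabs P + Rabs Q /\ Rabs (P - Q) <= Rabs P + Rabs Q).
  { split; unfold Rabs; repeat destruct Rcase_abs; lra. }
  assert (HY : sg * sg * Rabs Y <= 3 * eta).
  { replace (P + Q) with (2 * (ca * Y)) in HPQ by (unfold P, Q; ring).
    rewrite !Rabs_mult, (Rabs_pos_eq 2), (Rabs_pos_eq ca) in HPQ by lra.
    assert (sg * Rabs Y <= ca * Rabs Y) by (apply Rmult_le_compat_r; auto using Rabs_pos). nra. }
  assert (HZ : sg * sg * Rabs Z <= 3 * eta).
  { replace (P - Q) with (2 * (sa * Z)) in HPQ by (unfold P, Q; ring).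
    rewrite !Rabs_mult, (Rabs_pos_eq 2) in HPQ by lra.
    assert (sg * Rabs Z <= Rabs sa * Rabs Z) by (apply Rmult_le_compat_r; auto using Rabs_pos). nra. }
  assert (Hq : 0 < sg * sg) by nra.
  assert (HY' : Rabs Y <= 3 / 10) by (apply Rmult_le_reg_l with (sg * sg); auto; unfold eta in HY; lra).
  assert (HZ' : Rabs Z <= 3 / 10) by (apply Rmult_le_reg_l with (sg * sg); auto; unfold eta in HZ; lra).
  assert (HX' : Rabs X <= 1 / 5) by (unfold eta in BX; nra).
  assert (Sq : forall x, x * x = Rabs x * Rabs x) by (intros; rewrite <- Rabs_mult, Rabs_pos_eq; [ring|apply sq_nonneg]).
  rewrite (Sq X), (Sq Y), (Sq Z) in Par. pose proof (Rabs_pos X). pose proof (Rabs_pos Y). pose proof (Rabs_pos Z).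
  nra.
Qed.

(* S is flat at p0 with unit normal m: near p0, S lies in cones of arbitrarily small aperture around m^perp. *)
Definition flat_at (S : R3 -> Prop) (p0 m : R3) : Prop :=
  forall eta, 0 < eta -> exists r, 0 < r /\
    forall p, S p -> vnorm (vsub p p0) < r -> Rabs (dot m (vsub p p0)) <= eta * vnorm (vsub p p0).

Lemma flat_at_subset (S S' : R3 -> Prop) p0 m :
  (forall p, S p -> S' p) -> flat_at S' p0 m -> flat_at S p0 m.
Proof. intros HS Hf eta Heta. destruct (Hf eta Heta) as [r [Hr H]]. exists r. auto. Qed.

Lemma flat_at_image T U (S : R3 -> Prop) p0 m :
  (forall p q, vsub (T p) (T q) = U (vsub p q)) -> orth_linear U ->
  flat_at (fun q => exists p, S p /\ q = T p) (T p0) m -> forall eta, 0 < eta -> exists r, 0 < r /\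
  forall p, S p -> vnorm (vsub p p0) < r -> Rabs (dot m (U (vsub p p0))) <= eta * vnorm (vsub p p0).
Proof.
  intros HTU HU Hf eta Heta. destruct (Hf eta Heta) as [r [Hr H]]. exists r. split; auto.
  intros p Hp Hpr. rewrite <- (orth_vnorm U HU), <- HTU in *. apply H; eauto.
Qed.

Lemma flat_ray_bound (S : R3 -> Prop) U p0 X m eta r delta : orth_linear U -> vnorm X = 1 -> 0 < r -> 0 < delta ->
  (forall v, 0 < v < delta -> S (vadd p0 (vscale v X))) ->
  (forall p, S p -> vnorm (vsub p p0) < r -> Rabs (dot m (U (vsub p p0))) <= eta * vnorm (vsub p p0)) ->
  Rabs (dot m (U X)) <= eta.
Proof.
  intros HU HX Hr Hd HS Hfl. set (v := Rmin delta r / 2).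
  assert (Hv : 0 < v) by (unfold v; apply Rdiv_lt_0_compat; [apply Rmin_glb_lt|]; lra).
  pose proof (Rmin_l delta r). pose proof (Rmin_r delta r).
  assert (E : vsub (vadd p0 (vscale v X)) p0 = vscale v X) by (apply R3_ext; vunfold; ring).
  pose proof (Hfl _ (HS v ltac:(unfold v in *; lra))) as H1.
  rewrite E, vnorm_scale, HX, (orth_scale HU), dot_scaler, Rabs_mult, (Rabs_pos_eq v), Rmult_1_r in H1 by lra.
  assert (v * Rabs (dot m (U X)) <= v * eta) by (rewrite (Rmult_comm v eta); apply H1; unfold v in *; lra).
  apply Rmult_le_reg_l with v; lra.
Qed.

(** * The Frenet frame of the curve *)

Definition frame_dir (ce cdd : R -> R3) (al : R -> R) t :=
  vadd (vscale (cos (al t)) (normal cdd t)) (vscale (sin (al t)) (binormal ce cdd t)).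
(* The unit normal of the strip: orthogonal to the tangent and to the ruling. *)
Definition strip_normal (ce cdd : R -> R3) (al : R -> R) t :=
  vsub (vscale (cos (al t)) (binormal ce cdd t)) (vscale (sin (al t)) (normal cdd t)).

Lemma ruling_frame_dir ce cdd al be t :
  ruling ce cdd al be t = vadd (vscale (cos (be t)) (ce t)) (vscale (sin (be t)) (frame_dir ce cdd al t)).
Proof. reflexivity. Qed.

Lemma strip_zero c ce cdd al be t : strip c ce cdd al be t 0 = c t.
Proof. apply R3_ext; unfold strip; vunfold; ring. Qed.

Lemma Rmax0_gap_lip eta p q :
  Rabs (Rmax 0 (eta - Rabs p) - Rmax 0 (eta - Rabs q)) <= Rabs (p - q).
Proof. unfold Rmax, Rabs; repeat destruct Rcase_abs; repeat destruct Rle_dec; repeat destruct Rcase_abs; lra. Qed.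

Set Implicit Arguments.
Record frenet_curve (a b : R) (c ce cdd nd : R -> R3) : Prop := {
  curve_interval : a < b;
  curve_smooth : smooth3 c;
  curve_tangent : forall t, deriv3 c ce t;
  curve_acceleration : forall t, deriv3 ce cdd t;
  curve_unit_speed : forall t, a <= t <= b -> vnorm (ce t) = 1;
  curve_injective : forall s t, a <= s <= b -> a <= t <= b -> c s = c t -> s = t;
  curve_curvature_pos : forall t, a <= t <= b -> 0 < curvature cdd t;
  curve_normal_deriv : forall t, a <= t <= b -> deriv3 (normal cdd) nd t }.

Record admissible_strip (a b : R) (ce cdd nd : R -> R3) (al ald be : R -> R) : Prop := {
  angle_deriv : forall t, derivable_pt_lim al t (ald t);
  angle_lipbnd : lipbnd a b al;
  angle_deriv_lipbnd : lipbnd a b ald;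
  angle_range : forall t, a <= t <= b -> 0 < Rabs (al t) < PI / 2;
  angle_developable : developable_angle a b ce cdd nd al ald be }.
Unset Implicit Arguments.

Lemma admissible_strip_of_smooth a b ce cdd nd al ald be : a <= b -> smooth al ->
  (forall t, derivable_pt_lim al t (ald t)) -> (forall t, a <= t <= b -> 0 < Rabs (al t) < PI / 2) ->
  developable_angle a b ce cdd nd al ald be -> admissible_strip a b ce cdd nd al ald be.
Proof.
  intros Hab Hs Hd Hr Hdev. split; auto; apply smooth_lipbnd; auto.
  apply (smooth_derivative al); auto.
Qed.

Lemma interval_point_at_distance a b t h : a <= t <= b -> 0 < h -> h <= (b - a) / 2 ->
  exists t', a <= t' <= b /\ Rabs (t' - t) = h.
Proof.
  intros Ht Hh Hh1. destruct (Rle_dec (t + h) b).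
  - exists (t + h). split; [lra|]. replace (t + h - t) with h by ring. apply Rabs_pos_eq; lra.
  - exists (t - h). split; [lra|]. replace (t - h - t) with (- h) by ring. rewrite Rabs_Ropp. apply Rabs_pos_eq; lra.
Qed.

Section Curve.
Context {a b : R} {c ce cdd nd : R -> R3} (Hcurve : frenet_curve a b c ce cdd nd).
#[local] Set Default Proof Using "Hcurve".

Let Hab := curve_interval Hcurve.
Let Hc_smooth := curve_smooth Hcurve.
Let Hce := curve_tangent Hcurve.
Let Hcdd := curve_acceleration Hcurve.
Let Harc := curve_unit_speed Hcurve.
Let Hemb := curve_injective Hcurve.
Let Hkappa := curve_curvature_pos Hcurve.
Let Hnd := curve_normal_deriv Hcurve.
Let Hab' : a <= b. Proof. lra. Qed.

Lemma curve_lipbnd : exists E : R -> R3, (forall t, deriv3 cdd E t) /\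
  lipbnd3 a b c /\ lipbnd3 a b ce /\ lipbnd3 a b cdd /\ lipbnd3 a b E.
Proof.
  destruct Hc_smooth as [S1 [S2 S3]].
  pose proof (smooth_derivative _ _ S1 (fun t => proj1 (Hce t))) as Se1.
  pose proof (smooth_derivative _ _ S2 (fun t => proj1 (proj2 (Hce t)))) as Se2.
  pose proof (smooth_derivative _ _ S3 (fun t => proj2 (proj2 (Hce t)))) as Se3.
  pose proof (smooth_derivative _ _ Se1 (fun t => proj1 (Hcdd t))) as Sd1.
  pose proof (smooth_derivative _ _ Se2 (fun t => proj1 (proj2 (Hcdd t)))) as Sd2.
  pose proof (smooth_derivative _ _ Se3 (fun t => proj2 (proj2 (Hcdd t)))) as Sd3.
  destruct (smooth_derivable _ Sd1) as [E1 HE1]. destruct (smooth_derivable _ Sd2) as [E2 HE2].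
  destruct (smooth_derivable _ Sd3) as [E3 HE3].
  pose proof (smooth_derivative _ _ Sd1 HE1). pose proof (smooth_derivative _ _ Sd2 HE2).
  pose proof (smooth_derivative _ _ Sd3 HE3).
  exists (fun s => mkR3 (E1 s) (E2 s) (E3 s)). repeat split; simpl; auto; apply smooth_lipbnd; auto.
Qed.

Lemma curvature_sq t : curvature cdd t * curvature cdd t = dot (cdd t) (cdd t).
Proof. apply vnorm_sq. Qed.

Lemma cdd_normal t : a <= t <= b -> cdd t = vscale (curvature cdd t) (normal cdd t).
Proof. intros Ht. pose proof (Hkappa t Ht). unfold normal. apply R3_ext; vunfold; field; lra. Qed.

Lemma frame_ee t : a <= t <= b -> dot (ce t) (ce t) = 1.
Proof. intros Ht. rewrite <- vnorm_sq, Harc; auto; ring. Qed.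

Lemma frame_ec t : a <= t <= b -> dot (ce t) (cdd t) = 0.
Proof.
  intros Ht. pose proof (deriv3_dot ce cdd ce cdd t (Hcdd t) (Hcdd t)) as H.
  apply (derivative_zero_of_const_on a b _ t _ Hab Ht) in H.
  - rewrite (dot_comm (cdd t)) in H. lra.
  - intros s Hs. rewrite !frame_ee; auto.
Qed.

Lemma frame_nn t : a <= t <= b -> dot (normal cdd t) (normal cdd t) = 1.
Proof.
  intros Ht. pose proof (Hkappa t Ht). unfold normal.
  rewrite dot_scalel, dot_scaler, <- curvature_sq. field. lra.
Qed.

Lemma frame_en t : a <= t <= b -> dot (ce t) (normal cdd t) = 0.
Proof. intros Ht. unfold normal. rewrite dot_scaler, frame_ec; auto; ring. Qed.

Lemma frame_bb t : a <= t <= b -> dot (binormal ce cdd t) (binormal ce cdd t) = 1.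
Proof. intros Ht. unfold binormal. rewrite lagrange_identity, frame_ee, frame_nn, frame_en; auto; ring. Qed.
Lemma frame_eb t : dot (ce t) (binormal ce cdd t) = 0.
Proof. unfold binormal; vunfold; ring. Qed.
Lemma frame_nb t : dot (normal cdd t) (binormal ce cdd t) = 0.
Proof. unfold binormal; vunfold; ring. Qed.

Lemma frame_dots t : a <= t <= b ->
  dot (ce t) (ce t) = 1 /\ dot (normal cdd t) (normal cdd t) = 1 /\
  dot (binormal ce cdd t) (binormal ce cdd t) = 1 /\
  dot (ce t) (normal cdd t) = 0 /\ dot (normal cdd t) (ce t) = 0 /\
  dot (ce t) (binormal ce cdd t) = 0 /\ dot (binormal ce cdd t) (ce t) = 0 /\
  dot (normal cdd t) (binormal ce cdd t) = 0 /\ dot (binormal ce cdd t) (normal cdd t) = 0.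
Proof.
  intros Ht. rewrite (dot_comm (normal cdd t) (ce t)), (dot_comm (binormal ce cdd t) (ce t)),
    (dot_comm (binormal ce cdd t) (normal cdd t)).
  rewrite frame_ee, frame_nn, frame_bb, frame_en, frame_eb, frame_nb; auto. repeat split; auto.
Qed.

Lemma frame_n_nd t : a <= t <= b -> dot (normal cdd t) (nd t) = 0.
Proof.
  intros Ht. pose proof (deriv3_dot _ _ _ _ t (Hnd t Ht) (Hnd t Ht)) as H.
  apply (derivative_zero_of_const_on a b _ t _ Hab Ht) in H.
  - rewrite (dot_comm (nd t)) in H. lra.
  - intros s Hs. rewrite !frame_nn; auto.
Qed.

Lemma frame_e_nd t : a <= t <= b -> dot (ce t) (nd t) = - curvature cdd t.
Proof.
  intros Ht. pose proof (deriv3_dot _ _ _ _ t (Hcdd t) (Hnd t Ht)) as H.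
  apply (derivative_zero_of_const_on a b _ t _ Hab Ht) in H.
  - rewrite (cdd_normal t Ht), dot_scalel, frame_nn in H; auto. lra.
  - intros s Hs. rewrite !frame_en; auto.
Qed.

(* n' = c''' / kappa - (c'' . c''') c'' / kappa^3, so n' inherits the regularity of c. *)
Definition nd_expr (E : R -> R3) t : R3 :=
  vsub (vscale (/ curvature cdd t) (E t))
       (vscale (dot (cdd t) (E t) / (curvature cdd t * curvature cdd t * curvature cdd t)) (cdd t)).

Lemma nd_formula E : (forall t, deriv3 cdd E t) -> forall t, a <= t <= b -> nd t = nd_expr E t.
Proof.
  intros HE t Ht. pose proof (Hkappa t Ht) as Hk. unfold curvature, vnorm in Hk.
  destruct (HE t) as [G1 [G2 G3]]. destruct (Hnd t Ht) as [N1 [N2 N3]].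
  set (f1 := fun s => x1 (cdd s)) in *. set (f2 := fun s => x2 (cdd s)) in *. set (f3 := fun s => x3 (cdd s)) in *.
  set (S := f1 t * f1 t + f2 t * f2 t + f3 t * f3 t).
  assert (HS : 0 < S).
  { apply Rnot_le_lt. intros Hle. assert (dot (cdd t) (cdd t) = 0) by (pose proof (dot_ge0 (cdd t)); unfold S, f1, f2, f3 in Hle; vunfold; lra).
    rewrite H, sqrt_0 in Hk. lra. }
  pose proof (sqrt_lt_R0 S HS).
  apply is_derive_Reals in G1, G2, G3.
  assert (Hder : forall (g : R -> R) g', is_derive g t g' ->
    is_derive (fun s => / sqrt (f1 s * f1 s + f2 s * f2 s + f3 s * f3 s) * g s) t
      (g' / sqrt S - g t * (f1 t * x1 (E t) + f2 t * x2 (E t) + f3 t * x3 (E t)) / (sqrt S * sqrt S * sqrt S))).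
  { intros g g' Hg. auto_derive.
    - repeat split; try (eexists; eassumption); fold S; try lra; apply Rgt_not_eq; auto.
    - replace (Derive (fun x => f1 x) t) with (x1 (E t)) by (symmetry; apply is_derive_unique; exact G1).
      replace (Derive (fun x => f2 x) t) with (x2 (E t)) by (symmetry; apply is_derive_unique; exact G2).
      replace (Derive (fun x => f3 x) t) with (x3 (E t)) by (symmetry; apply is_derive_unique; exact G3).
      replace (Derive (fun x => g x) t) with g' by (symmetry; apply is_derive_unique; exact Hg).
      fold S. field. lra. }
  pose proof (Hder f1 _ G1) as D1. pose proof (Hder f2 _ G2) as D2. pose proof (Hder f3 _ G3) as D3.
  apply is_derive_Reals in D1, D2, D3.
  pose proof (uniqueness_limite _ t _ _ N1 D1) as U1.
  pose proof (uniqueness_limite _ t _ _ N2 D2) as U2.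
  pose proof (uniqueness_limite _ t _ _ N3 D3) as U3.
  apply R3_ext; unfold nd_expr, vsub, vscale, curvature, vnorm, dot; simpl; [rewrite U1|rewrite U2|rewrite U3];
    fold S; unfold f1, f2, f3 in *; fold S; field; lra.
Qed.

Lemma frame_lipbnd : exists km, 0 < km /\ (forall t, a <= t <= b -> km <= curvature cdd t) /\
  lipbnd a b (curvature cdd) /\ lipbnd3 a b c /\ lipbnd3 a b ce /\ lipbnd3 a b cdd /\
  lipbnd3 a b (normal cdd) /\ lipbnd3 a b (binormal ce cdd) /\ lipbnd3 a b nd /\
  lipbnd a b (torsion ce cdd nd).
Proof.
  destruct curve_lipbnd as [E [HE [Lc [Le [Ld LE]]]]].
  assert (Ldd : lipbnd a b (fun s => dot (cdd s) (cdd s))) by (apply lipbnd_dot; auto).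
  destruct (lipbnd_pos_lower_bound a b _ Hab' Ldd) as [m [Hm Hml]].
  { intros s Hs. rewrite <- curvature_sq. pose proof (Hkappa s Hs). nra. }
  assert (Lk : lipbnd a b (curvature cdd)) by (apply (lipbnd_sqrt a b _ m Hm Ldd Hml)).
  destruct (lipbnd_pos_lower_bound a b _ Hab' Lk) as [km [Hkm Hkml]]; [intros; apply Hkappa; auto|].
  assert (Lik : lipbnd a b (fun s => / curvature cdd s)) by (apply (lipbnd_inv a b _ km); auto).
  pose proof (lipbnd3_vscale a b _ _ Lik Ld) as Ln. change (lipbnd3 a b (normal cdd)) in Ln.
  pose proof (lipbnd3_cross a b _ _ Le Ln) as Lb. change (lipbnd3 a b (binormal ce cdd)) in Lb.
  assert (Lk3 : lipbnd a b (fun s => / (curvature cdd s * curvature cdd s * curvature cdd s))).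
  { apply (lipbnd_inv a b _ (km * km * km)); [repeat apply Rmult_lt_0_compat; auto|repeat apply lipbnd_mult; auto|].
    intros s Hs. pose proof (Hkml s Hs). assert (0 <= km * km) by (apply Rmult_le_pos; lra).
    apply Rmult_le_compat; try lra. apply Rmult_le_compat; lra. }
  assert (Lnd : lipbnd3 a b nd).
  { apply (lipbnd3_ext a b (nd_expr E)); [|intros; apply nd_formula; auto].
    unfold nd_expr. apply lipbnd3_vsub; apply lipbnd3_vscale; auto.
    unfold Rdiv. apply lipbnd_mult; auto. apply lipbnd_dot; auto. }
  exists km. repeat (split; auto). unfold torsion. apply lipbnd_dot; auto.
Qed.

Lemma curve_taylor : exists K, 0 <= K /\ forall s s', a <= s <= b -> a <= s' <= b ->
  vnorm (vsub (vsub (c s) (c s')) (vscale (s - s') (ce s'))) <= K * ((s - s') * (s - s')).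
Proof.
  destruct curve_lipbnd as [_ [_ [_ [[L1 [L2 L3]] _]]]].
  destruct (lipbnd_lip _ _ _ L1) as [K1 [HK1 M1]]. destruct (lipbnd_lip _ _ _ L2) as [K2 [HK2 M2]].
  destruct (lipbnd_lip _ _ _ L3) as [K3 [HK3 M3]].
  exists (K1 + K2 + K3). split; [lra|]. intros s s' Hs Hs'.
  eapply Rle_trans; [apply vnorm_comp_bound|]. unfold vsub, vscale; simpl.
  pose proof (taylor_lip a b (fun x => x1 (c x)) (fun x => x1 (ce x)) K1 (fun x _ => proj1 (Hce x)) M1 HK1 s s' Hs Hs').
  pose proof (taylor_lip a b (fun x => x2 (c x)) (fun x => x2 (ce x)) K2 (fun x _ => proj1 (proj2 (Hce x))) M2 HK2 s s' Hs Hs').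
  pose proof (taylor_lip a b (fun x => x3 (c x)) (fun x => x3 (ce x)) K3 (fun x _ => proj2 (proj2 (Hce x))) M3 HK3 s s' Hs Hs').
  simpl in *. lra.
Qed.

Lemma curve_chord : exists K, 0 <= K /\ forall x y, a <= x <= b -> a <= y <= b ->
  Rabs (vnorm (vsub (c x) (c y)) - Rabs (x - y)) <= K * (Rabs (x - y) * Rabs (x - y)).
Proof.
  destruct curve_taylor as [K [HK HT]]. exists K. split; auto. intros x y Hx Hy.
  pose proof (HT x y Hx Hy) as H.
  replace (Rabs (x - y) * Rabs (x - y)) with ((x - y) * (x - y))
    by (rewrite <- Rabs_mult, Rabs_pos_eq; [ring|apply sq_nonneg]).
  assert (E : vsub (c x) (c y) = vadd (vscale (x - y) (ce y)) (vsub (vsub (c x) (c y)) (vscale (x - y) (ce y))))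
    by (apply R3_ext; vunfold; ring).
  pose proof (vnorm_triangle (vscale (x - y) (ce y)) (vsub (vsub (c x) (c y)) (vscale (x - y) (ce y)))) as T1.
  pose proof (vnorm_rev_triangle (vscale (x - y) (ce y)) (vsub (vsub (c x) (c y)) (vscale (x - y) (ce y)))) as T2.
  rewrite <- E, vnorm_scale, Harc in T1, T2 by auto. apply Rabs_le. lra.
Qed.

Lemma curve_lip : exists Kc, 0 <= Kc /\ forall s s', a <= s <= b -> a <= s' <= b ->
  vnorm (vsub (c s) (c s')) <= Kc * Rabs (s - s').
Proof. destruct curve_lipbnd as [_ [_ [Lc _]]]. apply lipbnd3_lip; auto. Qed.

Lemma curve_dist_continuity x y : continuity_pt (fun y => vnorm (vsub (c x) (c y))) y.
Proof.
  unfold vnorm. apply (continuity_pt_comp (fun y => dot (vsub (c x) (c y)) (vsub (c x) (c y))) sqrt).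
  - unfold dot, vsub; simpl. destruct (Hce y) as [H1 [H2 H3]].
    pose proof (derivable_continuity _ _ _ H1). pose proof (derivable_continuity _ _ _ H2).
    pose proof (derivable_continuity _ _ _ H3).
    repeat apply continuity_pt_plus; apply continuity_pt_mult; apply continuity_pt_minus; auto;
      apply continuity_pt_const; intros ??; auto.
  - apply continuity_pt_sqrt. apply dot_ge0.
Qed.

(* Since c is injective on [a, b], the function gap x y below is positive; it is continuous in y and its
   minimum over y is Lipschitz in x, so by compactness gap is bounded below by a positive constant. *)
Lemma curve_separation eta : 0 < eta -> exists m, 0 < m /\ forall x y, a <= x <= b -> a <= y <= b ->
  eta <= Rabs (x - y) -> m <= vnorm (vsub (c x) (c y)).
Proof.
  intros Heta. destruct curve_lip as [Kc [HKc HL]].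
  set (gap := fun x y => vnorm (vsub (c x) (c y)) + Rmax 0 (eta - Rabs (x - y))).
  assert (Hcont : forall x y, continuity_pt (fun y => gap x y) y).
  { intros x y. unfold gap. apply continuity_pt_plus; [apply curve_dist_continuity|].
    apply (loclip_continuity _ 1 1); [lra|lra|]. intros u v _.
    rewrite Rmult_1_l, (Rabs_minus_sym u v). replace (v - u) with ((x - u) - (x - v)) by ring.
    apply Rmax0_gap_lip. }
  assert (Hmin : forall x, exists y, a <= y <= b /\ forall y', a <= y' <= b -> gap x y <= gap x y').
  { intros x. destruct (continuity_ab_min (fun y => gap x y) a b Hab' (fun y _ => Hcont x y)) as [y [Hy Hyi]].
    exists y; split; auto. }
  destruct (functional_choice _ Hmin) as [ys Hys].
  set (Phi := fun x => gap x (ys x)).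
  assert (HPhi : forall x x', a <= x <= b -> a <= x' <= b -> Phi x <= Phi x' + (Kc + 1) * Rabs (x - x')).
  { intros x x' Hx Hx'. unfold Phi. destruct (Hys x) as [_ H1]. destruct (Hys x') as [H2 _].
    eapply Rle_trans; [apply (H1 (ys x')); auto|]. unfold gap.
    pose proof (vnorm_sub_triangle (c x) (c x') (c (ys x'))). pose proof (HL x x' Hx Hx').
    pose proof (Rmax0_gap_lip eta (x - ys x') (x' - ys x')) as H3.
    replace (x - ys x' - (x' - ys x')) with (x - x') in H3 by ring.
    apply Rabs_le_between in H3. lra. }
  assert (HPc : forall x, continuity_pt (fun s => Phi (clamp a b s)) x).
  { apply (loclip_continuity _ (Kc + 1) 1); [lra|lra|]. intros u v _.
    pose proof (HPhi (clamp a b u) (clamp a b v) (clamp_in a b u Hab') (clamp_in a b v Hab')).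
    pose proof (HPhi (clamp a b v) (clamp a b u) (clamp_in a b v Hab') (clamp_in a b u Hab')).
    pose proof (clamp_lip a b u v). rewrite Rabs_minus_sym in H0. apply Rabs_le; split; nra. }
  destruct (continuity_ab_min _ a b Hab' (fun x _ => HPc x)) as [x0 [Hx0 Hx0i]].
  rewrite clamp_id in Hx0 by auto.
  assert (Hpos : 0 < Phi x0).
  { unfold Phi, gap. destruct (Hys x0) as [Hy _].
    pose proof (vnorm_ge0 (vsub (c x0) (c (ys x0)))). pose proof (Rmax_l 0 (eta - Rabs (x0 - ys x0))).
    destruct (Req_dec (vnorm (vsub (c x0) (c (ys x0)))) 0) as [Hz|Hz]; [|lra].
    assert (E : c x0 = c (ys x0)).
    { assert (Hd : vsub (c x0) (c (ys x0)) = vzero) by (apply dot_self_eq0; rewrite <- vnorm_sq, Hz; ring).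
      unfold vzero in Hd; vunfold. injection Hd; intros; apply R3_ext; lra. }
    rewrite <- (Hemb _ _ Hx0i Hy E) in Hz |- *. unfold Rminus. rewrite Rplus_opp_r, Rabs_R0, Rmax_right; lra. }
  exists (Phi x0). split; auto. intros x y Hx Hy Hxy.
  pose proof (Hx0 x Hx) as H. rewrite clamp_id in H by auto.
  destruct (Hys x) as [_ Hmn]. specialize (Hmn y Hy). unfold Phi, gap in H, Hmn |- *.
  rewrite (Rmax_left 0 (eta - Rabs (x - y))) in Hmn by lra. lra.
Qed.

(* A map of the parameter interval induced by an isometry preserving C is locally almost isometric:
   chords are almost arc lengths at small scales, and uniformly separated parameters stay separated. *)
Lemma curve_self_map_near_isometric T : isometry T -> forall h : R -> R,
  (forall t, a <= t <= b -> a <= h t <= b /\ T (c t) = c (h t)) ->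
  forall theta, 0 < theta <= 1/10 -> exists dt, 0 < dt /\
    forall x y, a <= x <= b -> a <= y <= b -> Rabs (x - y) <= dt ->
    (1 - theta) * Rabs (x - y) <= (1 + theta) * Rabs (h x - h y) /\
    (1 - theta) * Rabs (h x - h y) <= (1 + theta) * Rabs (x - y).
Proof.
  intros HTi h Hh theta Hth.
  destruct curve_chord as [K [HK HD]].
  assert (Hiso : forall x y, a <= x <= b -> a <= y <= b ->
    vnorm (vsub (c (h x)) (c (h y))) = vnorm (vsub (c x) (c y))).
  { intros x y Hx Hy. destruct (Hh x Hx) as [_ E1]. destruct (Hh y Hy) as [_ E2]. rewrite <- E1, <- E2. apply HTi. }
  set (rt := theta / (K + 1)). assert (Hrt : 0 < rt) by (unfold rt; apply Rdiv_lt_0_compat; lra).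
  assert (HKrt : K * rt <= theta) by (apply mul_div_succ_le; lra).
  destruct (curve_separation rt Hrt) as [m [Hm Hsep]].
  exists (Rmin rt (m / 2)). split; [apply Rmin_glb_lt; lra|].
  intros x y Hx Hy Hxy. pose proof (Rmin_l rt (m / 2)). pose proof (Rmin_r rt (m / 2)).
  set (u := Rabs (x - y)) in *. set (u' := Rabs (h x - h y)).
  pose proof (Rabs_pos (x - y)). fold u in H1. pose proof (Rabs_pos (h x - h y)). fold u' in H2.
  destruct (Hh x Hx) as [Hhx _]. destruct (Hh y Hy) as [Hhy _].
  pose proof (HD x y Hx Hy) as D1. fold u in D1. pose proof (HD (h x) (h y) Hhx Hhy) as D2. fold u' in D2.
  rewrite Hiso in D2 by auto.
  set (Dxy := vnorm (vsub (c x) (c y))) in *.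
  assert (Ku : K * u <= theta) by (apply Rle_trans with (K * rt); [apply Rmult_le_compat_l; lra|auto]).
  assert (Hu' : u' < rt).
  { apply Rnot_le_lt. intros Hge. pose proof (Hsep (h x) (h y) Hhx Hhy Hge). rewrite Hiso in H3 by auto.
    fold Dxy in H3. unfold Rabs in D1; destruct Rcase_abs in D1; nra. }
  assert (Ku' : K * u' <= theta) by (apply Rle_trans with (K * rt); [apply Rmult_le_compat_l; lra|auto]).
  unfold Rabs in D1, D2; destruct Rcase_abs in D1; destruct Rcase_abs in D2; split; nra.
Qed.

Lemma curve_image_onto T : isometry T -> (forall t, a <= t <= b -> exists s, a <= s <= b /\ T (c t) = c s) ->
  forall s, a <= s <= b -> exists t, a <= t <= b /\ T (c t) = c s.
Proof.
  intros HTi H1.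
  assert (Hex : forall t, exists s, a <= t <= b -> a <= s <= b /\ T (c t) = c s).
  { intros t. destruct (classic (a <= t <= b)) as [Ht|Ht].
    - destruct (H1 t Ht) as [s Hs]. exists s. auto.
    - exists 0. intros; contradiction. }
  destruct (functional_choice _ Hex) as [h Hh].
  intros s Hs.
  destruct (near_isometric_onto a b h Hab (fun t Ht => proj1 (Hh t Ht))
    (curve_self_map_near_isometric T HTi h Hh) s Hs) as [t [Ht E]].
  exists t. split; auto. rewrite <- E. apply Hh; auto.
Qed.

Lemma flat_tangent_bound (S : R3 -> Prop) U t m eta r : orth_linear U -> a <= t <= b -> 0 < eta -> 0 < r ->
  dot m m = 1 -> (forall t', a <= t' <= b -> S (c t')) ->
  (forall p, S p -> vnorm (vsub p (c t)) < r -> Rabs (dot m (U (vsub p (c t)))) <= eta * vnorm (vsub p (c t))) ->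
  Rabs (dot m (U (ce t))) <= 2 * eta.
Proof.
  intros HU Ht Heta Hr Hm HS Hfl. destruct curve_taylor as [K [HK HT]].
  set (h := Rmin (Rmin ((b - a) / 2) 1) (Rmin (r / (2 * (K + 1))) (eta / ((eta + 1) * (K + 1))))).
  assert (Hh : 0 < h) by (unfold h; repeat apply Rmin_glb_lt; try lra; apply Rdiv_lt_0_compat; try lra; nra).
  assert (Hh1 : h <= (b - a) / 2) by (unfold h; eapply Rle_trans; [apply Rmin_l|apply Rmin_l]).
  assert (Hh2 : h <= 1) by (unfold h; eapply Rle_trans; [apply Rmin_l|apply Rmin_r]).
  assert (Hh3 : h <= r / (2 * (K + 1))) by (unfold h; eapply Rle_trans; [apply Rmin_r|apply Rmin_l]).
  assert (Hh4 : h <= eta / ((eta + 1) * (K + 1))) by (unfold h; eapply Rle_trans; [apply Rmin_r|apply Rmin_r]).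
  destruct (interval_point_at_distance a b t h ltac:(lra) Hh Hh1) as [t' [Ht' Hth]].
  set (R := vsub (vsub (c t') (c t)) (vscale (t' - t) (ce t))).
  pose proof (HT t' t Ht' Ht) as HR. fold R in HR.
  replace ((t' - t) * (t' - t)) with (h * h) in HR by (rewrite <- Hth, <- Rabs_mult, Rabs_pos_eq; [ring|apply sq_nonneg]).
  assert (E : vsub (c t') (c t) = vadd (vscale (t' - t) (ce t)) R) by (unfold R; apply R3_ext; vunfold; ring).
  assert (Hn : vnorm (vsub (c t') (c t)) <= h + K * (h * h)).
  { rewrite E. eapply Rle_trans; [apply vnorm_triangle|]. rewrite vnorm_scale, Harc, Hth by auto. lra. }
  assert (HKh : K * (h * h) <= K * h) by (apply Rmult_le_compat_l; auto; nra).
  assert (Kh2 : (K + 1) * h <= r / 2).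
  { apply Rle_trans with ((K + 1) * (r / (2 * (K + 1)))); [apply Rmult_le_compat_l; lra|right; field; lra]. }
  pose proof (Hfl _ (HS t' Ht') ltac:(nra)) as Hb.
  rewrite E, (orth_add HU), (orth_scale HU), dot_addr, dot_scaler, <- E in Hb.
  assert (HUR : Rabs (dot m (U R)) <= K * (h * h)).
  { rewrite dot_comm. eapply Rle_trans; [apply abs_dot_unit; auto|]. rewrite (orth_vnorm U HU). auto. }
  assert (Hb2 : h * Rabs (dot m (U (ce t))) <= eta * (h + K * (h * h)) + K * (h * h)).
  { replace (h * Rabs (dot m (U (ce t)))) with (Rabs ((t' - t) * dot m (U (ce t)))) by (rewrite Rabs_mult, Hth; ring).
    pose proof (Rabs_triang ((t' - t) * dot m (U (ce t)) + dot m (U R)) (- dot m (U R))). rewrite Rabs_Ropp in H.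
    replace ((t' - t) * dot m (U (ce t)) + dot m (U R) + - dot m (U R)) with ((t' - t) * dot m (U (ce t))) in H by ring.
    assert (eta * vnorm (vsub (c t') (c t)) <= eta * (h + K * (h * h))) by (apply Rmult_le_compat_l; lra). lra. }
  assert (Hk : (eta + 1) * K * h <= eta).
  { assert ((eta + 1) * K * h <= (eta + 1) * (K + 1) * h) by (apply Rmult_le_compat_r; [lra|apply Rmult_le_compat_l; lra]).
    assert ((eta + 1) * (K + 1) * h <= (eta + 1) * (K + 1) * (eta / ((eta + 1) * (K + 1))))
      by (apply Rmult_le_compat_l; [nra|auto]).
    replace ((eta + 1) * (K + 1) * (eta / ((eta + 1) * (K + 1)))) with eta in H0 by (field; lra). lra. }
  apply Rmult_le_reg_l with h; auto.
  assert (h * ((eta + 1) * K * h) <= h * eta) by (apply Rmult_le_compat_l; lra). lra.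
Qed.

Lemma curve_offset_binormal_bound (X : R -> R3) t0 s w v k0 K Kx sig :
  a <= t0 <= b -> 0 < k0 -> 0 <= K -> 0 <= Kx -> Rabs sig <= 1 ->
  k0 * (Rabs (s - t0) + Rabs w) <= v ->
  vnorm (vsub (vsub (c s) (c t0)) (vscale (s - t0) (ce t0))) <= K * ((s - t0) * (s - t0)) ->
  vnorm (vsub (X s) (X t0)) <= Kx * Rabs (s - t0) ->
  w * (sig * dot (binormal ce cdd t0) (X t0)) <= 0 ->
  k0 * k0 * (sig * dot (binormal ce cdd t0) (vsub (vadd (c s) (vscale w (X s))) (c t0))) <= (K + Kx) * (v * v).
Proof.
  intros Ht0 Hk0 HK HKx Hsig Hb HR HX Hsign.
  set (D := Rabs (s - t0)) in *. pose proof (Rabs_pos (s - t0)) as HD. fold D in HD. pose proof (Rabs_pos w).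
  replace ((s - t0) * (s - t0)) with (D * D) in HR by (unfold D; rewrite <- Rabs_mult, Rabs_pos_eq; [ring|apply sq_nonneg]).
  set (R := vsub (vsub (c s) (c t0)) (vscale (s - t0) (ce t0))) in *.
  destruct (frame_dots t0 Ht0) as [_ [_ [D3 [_ [_ [_ [Deb _]]]]]]].
  assert (E : sig * dot (binormal ce cdd t0) (vsub (vadd (c s) (vscale w (X s))) (c t0)) =
    sig * dot (binormal ce cdd t0) R + w * (sig * dot (binormal ce cdd t0) (X t0)) +
    sig * (w * dot (binormal ce cdd t0) (vsub (X s) (X t0)))).
  { replace (vsub (vadd (c s) (vscale w (X s))) (c t0)) with
      (vadd (vadd R (vscale (s - t0) (ce t0))) (vadd (vscale w (X t0)) (vscale w (vsub (X s) (X t0)))))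
      by (unfold R; apply R3_ext; vunfold; ring).
    dot_expand. rewrite Deb. ring. }
  pose proof (abs_dot_unit R _ D3) as H1. pose proof (abs_dot_unit (vsub (X s) (X t0)) _ D3) as H2.
  rewrite dot_comm in H1, H2.
  assert (T1 : sig * dot (binormal ce cdd t0) R <= K * (D * D)).
  { eapply Rle_trans; [apply Rle_abs|]. rewrite Rabs_mult.
    apply Rle_trans with (1 * vnorm R); [apply Rmult_le_compat; auto using Rabs_pos|lra]. }
  assert (T2 : sig * (w * dot (binormal ce cdd t0) (vsub (X s) (X t0))) <= Rabs w * (Kx * D)).
  { eapply Rle_trans; [apply Rle_abs|]. rewrite !Rabs_mult.
    pose proof (Rabs_pos sig). pose proof (Rabs_pos (dot (binormal ce cdd t0) (vsub (X s) (X t0)))).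
    assert (Rabs (dot (binormal ce cdd t0) (vsub (X s) (X t0))) <= Kx * D) by lra.
    apply Rle_trans with (1 * (Rabs w * (Kx * D))); [apply Rmult_le_compat; try nra|lra]. }
  assert (k0 * D <= v) by nra. assert (k0 * Rabs w <= v) by nra.
  assert (K * ((k0 * D) * (k0 * D)) <= K * (v * v)) by (apply Rmult_le_compat_l; auto; apply Rmult_le_compat; nra).
  assert (Kx * ((k0 * Rabs w) * (k0 * D)) <= Kx * (v * v)) by (apply Rmult_le_compat_l; auto; apply Rmult_le_compat; nra).
  rewrite E. nra.
Qed.

(** * One developable strip along the curve *)

Section Strip.
Context {al ald be : R -> R} (Hadm : admissible_strip a b ce cdd nd al ald be).
#[local] Set Default Proof Using "Hcurve Hadm".

Let Hald := angle_deriv Hadm.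
Let Hal_lb := angle_lipbnd Hadm.
Let Hald_lb := angle_deriv_lipbnd Hadm.
Let Hal := angle_range Hadm.
Let Hbe := angle_developable Hadm.

Notation xi := (ruling ce cdd al be).
Notation F := (strip c ce cdd al be).

Lemma cos_al_pos t : a <= t <= b -> 0 < cos (al t).
Proof. intros Ht. destruct (Hal t Ht) as [H1 H2]. apply cos_gt_0; unfold Rabs in H2; destruct Rcase_abs; lra. Qed.

Lemma sin_al_sq_pos t : a <= t <= b -> 0 < sin (al t) * sin (al t).
Proof.
  intros Ht. destruct (Hal t Ht) as [H1 H2]. pose proof PI2_1.
  unfold Rabs in *; destruct Rcase_abs.
  - assert (0 < sin (- al t)) by (apply sin_gt_0; lra). rewrite sin_neg in H0. nra.
  - assert (0 < sin (al t)) by (apply sin_gt_0; lra). nra.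
Qed.

Lemma sin_be_pos t : a <= t <= b -> 0 < sin (be t).
Proof. intros Ht. destruct (Hbe t Ht) as [[H1 H2] _]. apply sin_gt_0; auto. Qed.

Definition cot_be t :=
  (ald t + torsion ce cdd nd t) * sin (al t) * / (curvature cdd t * (sin (al t) * sin (al t))).

Lemma cos_be_cot t : a <= t <= b -> cos (be t) = cot_be t * sin (be t).
Proof.
  intros Ht. destruct (Hbe t Ht) as [_ Hd]. pose proof (sin_be_pos t Ht). pose proof (Hkappa t Ht).
  pose proof (sin_al_sq_pos t Ht). unfold cot_be.
  assert (sin (al t) <> 0) by (intro Hz; rewrite Hz in H1; lra).
  apply (f_equal (fun x => x * sin (be t))) in Hd. unfold Rdiv in Hd.
  replace (cos (be t) * / sin (be t) * sin (be t)) with (cos (be t)) in Hd by (field; lra).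
  rewrite Hd. field. repeat split; auto; lra.
Qed.

Lemma sin_be_cot t : a <= t <= b -> sin (be t) = / sqrt (1 + cot_be t * cot_be t).
Proof.
  intros Ht. pose proof (sin_be_pos t Ht). pose proof (cos_be_cot t Ht).
  pose proof (sin2_cos2 (be t)). rewrite H0 in H1. unfold Rsqr in H1.
  assert (E : 1 + cot_be t * cot_be t = / sin (be t) * / sin (be t)).
  { apply (Rmult_eq_reg_r (sin (be t) * sin (be t))); [|nra]. field_simplify; nra. }
  rewrite E, sqrt_square; [field; lra|]. apply Rlt_le, Rinv_0_lt_compat; auto.
Qed.

Lemma sin_al_sq_lower_bound : exists s2, 0 < s2 /\ forall t, a <= t <= b -> s2 <= sin (al t) * sin (al t).
Proof.
  apply lipbnd_pos_lower_bound; auto using sin_al_sq_pos. apply lipbnd_mult; apply lipbnd_sin; auto.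
Qed.

Lemma cot_be_lipbnd : lipbnd a b cot_be.
Proof.
  destruct frame_lipbnd as [km [Hkm [Hkml [Lk [_ [_ [_ [_ [_ [_ Lt]]]]]]]]]].
  destruct sin_al_sq_lower_bound as [s2 [Hs2 Hs2l]].
  unfold cot_be. apply lipbnd_mult; [apply lipbnd_mult; [apply lipbnd_plus|apply lipbnd_sin]; auto|].
  apply (lipbnd_inv a b _ (km * s2)); [nra|apply lipbnd_mult; auto; apply lipbnd_mult; apply lipbnd_sin; auto|].
  intros t Ht. apply Rmult_le_compat; try lra; auto.
Qed.

Lemma sin_be_lipbnd : lipbnd a b (fun t => sin (be t)).
Proof.
  pose proof cot_be_lipbnd.
  apply (lipbnd_ext a b (fun t => / sqrt (1 + cot_be t * cot_be t))); [|intros; apply sin_be_cot; auto].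
  apply (lipbnd_inv a b _ 1); [lra| |].
  - apply (lipbnd_sqrt a b _ 1); [lra|apply lipbnd_plus; [apply lipbnd_const|apply lipbnd_mult; auto]|].
    intros t _. pose proof (sq_nonneg (cot_be t)); lra.
  - intros t _. apply Rle_trans with (sqrt 1); [rewrite sqrt_1; lra|apply sqrt_le_1_alt].
    pose proof (sq_nonneg (cot_be t)); lra.
Qed.

Lemma cos_be_lipbnd : lipbnd a b (fun t => cos (be t)).
Proof.
  apply (lipbnd_ext a b (fun t => cot_be t * sin (be t))); [|intros; apply cos_be_cot; auto].
  apply lipbnd_mult; [apply cot_be_lipbnd|apply sin_be_lipbnd].
Qed.

Lemma strip_angles_lower_bound : exists sg, 0 < sg /\ sg <= 1 /\ forall t, a <= t <= b ->
  sg <= sin (be t) /\ sg <= cos (al t) /\ sg <= sin (al t) * sin (al t).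
Proof.
  destruct sin_al_sq_lower_bound as [s2 [Hs2 Hs2l]].
  destruct (lipbnd_pos_lower_bound a b _ Hab' (lipbnd_cos a b _ Hal_lb) cos_al_pos) as [s3 [Hs3 Hs3l]].
  destruct (lipbnd_pos_lower_bound a b _ Hab' sin_be_lipbnd sin_be_pos) as [s1 [Hs1 Hs1l]].
  exists (Rmin 1 (Rmin s1 (Rmin s2 s3))).
  pose proof (Rmin_l 1 (Rmin s1 (Rmin s2 s3))). pose proof (Rmin_r 1 (Rmin s1 (Rmin s2 s3))).
  pose proof (Rmin_l s1 (Rmin s2 s3)). pose proof (Rmin_r s1 (Rmin s2 s3)).
  pose proof (Rmin_l s2 s3). pose proof (Rmin_r s2 s3).
  split; [repeat apply Rmin_glb_lt; lra|]. split; [lra|].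
  intros t Ht. specialize (Hs1l t Ht). specialize (Hs2l t Ht). specialize (Hs3l t Ht). repeat split; lra.
Qed.

Lemma frame_dir_dots t : a <= t <= b ->
  dot (frame_dir ce cdd al t) (frame_dir ce cdd al t) = 1 /\ dot (ce t) (frame_dir ce cdd al t) = 0 /\
  dot (normal cdd t) (frame_dir ce cdd al t) = cos (al t) /\
  dot (binormal ce cdd t) (frame_dir ce cdd al t) = sin (al t) /\
  dot (strip_normal ce cdd al t) (frame_dir ce cdd al t) = 0 /\
  dot (strip_normal ce cdd al t) (strip_normal ce cdd al t) = 1 /\
  dot (strip_normal ce cdd al t) (ce t) = 0 /\ dot (strip_normal ce cdd al t) (normal cdd t) = - sin (al t) /\
  dot (strip_normal ce cdd al t) (binormal ce cdd t) = cos (al t).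
Proof.
  intros Ht. destruct (frame_dots t Ht) as [D1 [D2 [D3 [D4 [D5 [D6 [D7 [D8 D9]]]]]]]].
  pose proof (sin2_cos2 (al t)) as SC. unfold Rsqr in SC.
  unfold frame_dir, strip_normal. dot_expand. rewrite ?D1, ?D2, ?D3, ?D4, ?D5, ?D6, ?D7, ?D8, ?D9.
  repeat split; ring_simplify; try lra.
Qed.

Lemma ruling_dots t : a <= t <= b ->
  dot (xi t) (xi t) = 1 /\ dot (ce t) (xi t) = cos (be t) /\
  dot (normal cdd t) (xi t) = sin (be t) * cos (al t) /\
  dot (binormal ce cdd t) (xi t) = sin (be t) * sin (al t) /\
  dot (frame_dir ce cdd al t) (xi t) = sin (be t) /\ dot (strip_normal ce cdd al t) (xi t) = 0.
Proof.
  intros Ht. destruct (frame_dir_dots t Ht) as [U1 [U2 [U3 [U4 [U5 [U6 [U7 [U8 U9]]]]]]]].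
  destruct (frame_dots t Ht) as [D1 [D2 [D3 [D4 [D5 [D6 [D7 [D8 D9]]]]]]]].
  assert (U2' := U2). rewrite dot_comm in U2'.
  pose proof (sin2_cos2 (be t)) as SC. unfold Rsqr in SC.
  rewrite ruling_frame_dir. dot_expand. rewrite ?U1, ?U2, ?U2', ?U3, ?U4, ?U5, ?U7, ?D1, ?D4, ?D5, ?D6, ?D7.
  repeat split; ring_simplify; try lra.
Qed.

Lemma ruling_unit t : a <= t <= b -> vnorm (xi t) = 1.
Proof. intros Ht. apply vnorm_unit, ruling_dots; auto. Qed.

Lemma ruling_lipbnd : lipbnd3 a b xi.
Proof.
  destruct frame_lipbnd as [km [_ [_ [_ [_ [Le [_ [Ln [Lb _]]]]]]]]].
  unfold ruling. apply lipbnd3_vadd; apply lipbnd3_vscale; auto using sin_be_lipbnd, cos_be_lipbnd.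
  apply lipbnd3_vadd; apply lipbnd3_vscale; auto using lipbnd_sin, lipbnd_cos.
Qed.

Lemma deriv_normal_tangent s0 : a <= s0 <= b ->
  derivable_pt_lim (fun s => dot (strip_normal ce cdd al s0) (ce s)) s0 (- curvature cdd s0 * sin (al s0)).
Proof.
  intros Hs0. eapply dlim_eq; [apply deriv3_dot_const; apply Hcdd|].
  destruct (frame_dir_dots s0 Hs0) as [_ [_ [_ [_ [_ [_ [_ [M8 _]]]]]]]].
  rewrite (cdd_normal s0 Hs0), dot_scaler, M8. ring.
Qed.

Lemma deriv_normal_frame_dir s0 : a <= s0 <= b ->
  derivable_pt_lim (fun s => dot (strip_normal ce cdd al s0) (frame_dir ce cdd al s)) s0
    (ald s0 + torsion ce cdd nd s0).
Proof.
  intros Hs0. eapply dlim_eq.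
  - apply deriv3_dot_const. unfold frame_dir.
    eapply (deriv3_vadd (fun s => vscale (cos (al s)) (normal cdd s)) _ (fun s => vscale (sin (al s)) (binormal ce cdd s))).
    + apply deriv3_scale; [|apply Hnd; auto].
      apply (derivable_pt_lim_comp al cos); auto. apply derivable_pt_lim_cos.
    + apply deriv3_scale; [|apply deriv3_cross; [apply Hcdd|apply Hnd; auto]].
      apply (derivable_pt_lim_comp al sin); auto. apply derivable_pt_lim_sin.
  - simpl. destruct (frame_dir_dots s0 Hs0) as [_ [_ [_ [_ [_ [_ [_ [M8 M9]]]]]]]].
    assert (V3 : dot (strip_normal ce cdd al s0) (nd s0) = cos (al s0) * torsion ce cdd nd s0).
    { unfold strip_normal, torsion. dot_expand. rewrite (dot_comm (binormal ce cdd s0)), frame_n_nd; auto. ring. }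
    assert (V4 : dot (strip_normal ce cdd al s0) (cross (cdd s0) (normal cdd s0)) = 0).
    { rewrite (cdd_normal s0 Hs0), cross_scale_self, dot_zeror. auto. }
    assert (V5 : dot (strip_normal ce cdd al s0) (cross (ce s0) (nd s0)) = sin (al s0) * torsion ce cdd nd s0).
    { unfold strip_normal, torsion. dot_expand. unfold binormal at 1. rewrite binet_cauchy, dot_cross_swap.
      rewrite frame_ee, frame_n_nd, frame_e_nd, (dot_comm (normal cdd s0) (ce s0)), frame_en; auto.
      unfold binormal. ring. }
    dot_expand. rewrite M8, M9, V3, V4, V5.
    pose proof (sin2_cos2 (al s0)) as SC. unfold Rsqr in SC.
    rewrite <- (Rmult_1_r (ald s0 + torsion ce cdd nd s0)), <- SC. ring.
Qed.

(* This is the only place where developability enters. *)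
Lemma developable_identity s0 : a <= s0 <= b ->
  cos (be s0) * (- curvature cdd s0 * sin (al s0)) + sin (be s0) * (ald s0 + torsion ce cdd nd s0) = 0.
Proof.
  intros Hs0. rewrite (cos_be_cot s0 Hs0). unfold cot_be.
  pose proof (sin_al_sq_pos s0 Hs0). pose proof (Hkappa s0 Hs0).
  assert (sin (al s0) <> 0) by (intro Hz; rewrite Hz in H; lra). field. split; lra.
Qed.

Lemma developable_first_order s0 : a <= s0 <= b -> forall eta, 0 < eta -> exists rho, 0 < rho /\
  forall s, a <= s <= b -> Rabs (s - s0) < rho ->
  Rabs (dot (strip_normal ce cdd al s0) (xi s)) <= eta * Rabs (s - s0).
Proof.
  intros Hs0 eta Heta.
  destruct (lipbnd_lip _ _ _ sin_be_lipbnd) as [K1 [HK1 L1]].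
  destruct (lipbnd_lip _ _ _ cos_be_lipbnd) as [K2 [HK2 L2]].
  destruct (frame_dir_dots s0 Hs0) as [_ [_ [_ [_ [M5 [_ [M7 _]]]]]]].
  destruct (lip_mul_deriv_approx a b (fun s => cos (be s)) _ s0 _ K2 HK2 (fun s Hs => L2 s s0 Hs Hs0)
    (fun s => proj2 (Rabs_le_between _ _) (COS_bound (be s)))
    (deriv_normal_tangent s0 Hs0) M7 (eta / 2) ltac:(lra)) as [d1 [Hd1 HA]].
  destruct (lip_mul_deriv_approx a b (fun s => sin (be s)) _ s0 _ K1 HK1 (fun s Hs => L1 s s0 Hs Hs0)
    (fun s => proj2 (Rabs_le_between _ _) (SIN_bound (be s)))
    (deriv_normal_frame_dir s0 Hs0) M5 (eta / 2) ltac:(lra)) as [d2 [Hd2 HB]].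
  exists (Rmin d1 d2). split; [apply Rmin_glb_lt; auto|]. intros s Hs Hss.
  pose proof (Rmin_l d1 d2). pose proof (Rmin_r d1 d2).
  specialize (HA s Hs ltac:(lra)). specialize (HB s Hs ltac:(lra)). simpl in HA, HB.
  assert (Hdev : cos (be s0) * (- curvature cdd s0 * sin (al s0)) = - (sin (be s0) * (ald s0 + torsion ce cdd nd s0)))
    by (pose proof (developable_identity s0 Hs0); lra).
  rewrite ruling_frame_dir, dot_addr, !dot_scaler.
  apply Rle_trans with (eta / 2 * Rabs (s - s0) + eta / 2 * Rabs (s - s0)); [|lra].
  eapply Rle_trans; [|apply Rplus_le_compat; [exact HA|exact HB]].
  replace (cos (be s) * dot (strip_normal ce cdd al s0) (ce s) + sin (be s) * dot (strip_normal ce cdd al s0) (frame_dir ce cdd al s))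
    with ((cos (be s) * dot (strip_normal ce cdd al s0) (ce s) - cos (be s0) * (- curvature cdd s0 * sin (al s0)) * (s - s0))
      + (sin (be s) * dot (strip_normal ce cdd al s0) (frame_dir ce cdd al s) - sin (be s0) * (ald s0 + torsion ce cdd nd s0) * (s - s0)))
    by (rewrite Hdev; ring).
  apply Rabs_triang.
Qed.

Lemma tangent_ruling_lower_bound s' x y sg : a <= s' <= b -> 0 < sg <= 1 -> sg <= sin (be s') ->
  sg / 3 * (Rabs x + Rabs y) <= vnorm (vadd (vscale x (ce s')) (vscale y (xi s'))).
Proof.
  intros Hs' Hsg Hsb. set (M := vadd (vscale x (ce s')) (vscale y (xi s'))).
  destruct (ruling_dots s' Hs') as [_ [X2 [_ [_ [XU _]]]]]. destruct (frame_dir_dots s' Hs') as [U1 [U2 _]].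
  destruct (frame_dots s' Hs') as [D1 _].
  assert (E1 : dot M (ce s') = x + y * cos (be s')).
  { unfold M. dot_expand. rewrite D1, (dot_comm (xi s') (ce s')), X2. ring. }
  assert (E2 : dot M (frame_dir ce cdd al s') = y * sin (be s')).
  { unfold M. dot_expand. rewrite U2, (dot_comm (xi s') (frame_dir ce cdd al s')), XU. ring. }
  pose proof (abs_dot_unit M (ce s') D1) as B1. rewrite E1 in B1.
  pose proof (abs_dot_unit M (frame_dir ce cdd al s') U1) as B2. rewrite E2 in B2.
  pose proof (COS_bound (be s')). rewrite Rabs_mult, (Rabs_pos_eq (sin (be s'))) in B2 by lra.
  assert (Rabs x - Rabs y <= Rabs (x + y * cos (be s'))).
  { pose proof (Rabs_triang (x + y * cos (be s')) (- (y * cos (be s')))).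
    replace (x + y * cos (be s') + - (y * cos (be s'))) with x in H0 by ring. rewrite Rabs_Ropp, Rabs_mult in H0.
    assert (Rabs (cos (be s')) <= 1) by (apply Rabs_le; lra). pose proof (Rabs_pos y).
    assert (Rabs y * Rabs (cos (be s')) <= Rabs y) by nra. lra. }
  pose proof (Rabs_pos x). pose proof (Rabs_pos y).
  assert (Rabs y * sg <= Rabs y * sin (be s')) by (apply Rmult_le_compat_l; lra).
  destruct (Rle_dec (Rabs x) (2 * Rabs y)); nra.
Qed.

Lemma strip_lower_lip : exists rho eps1 k0, 0 < rho /\ 0 < eps1 /\ 0 < k0 /\
  forall s s' w w', a <= s <= b -> a <= s' <= b -> Rabs (s - s') <= rho -> Rabs w <= eps1 ->
  k0 * (Rabs (s - s') + Rabs (w - w')) <= vnorm (vsub (F s w) (F s' w')).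
Proof.
  destruct strip_angles_lower_bound as [sg [Hsg [Hsg1 Hang]]].
  destruct (lipbnd3_lip a b _ ruling_lipbnd) as [Kx [HKx Lx]].
  destruct curve_taylor as [K [HK HT]].
  exists (sg / 3 / (4 * (K + 1))), (sg / 3 / (4 * (Kx + 1))), (sg / 3 / 2).
  repeat split; try (apply Rdiv_lt_0_compat; lra).
  intros s s' w w' Hs Hs' Hss Hw.
  rewrite strip_sub. replace (vsub (vscale w (xi s')) (vscale w' (xi s'))) with (vscale (w - w') (xi s'))
    by (apply R3_ext; vunfold; ring).
  apply (curve_perturbation_lower_bound c ce xi K Kx); auto; try lra.
  - pose proof (Rabs_pos (w - w')). lra.
  - apply tangent_ruling_lower_bound; auto. apply Hang; auto.
Qed.

Lemma strip_normal_dot_sub s0 s w w0 : a <= s0 <= b ->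
  dot (strip_normal ce cdd al s0) (vsub (F s w) (F s0 w0)) =
  dot (strip_normal ce cdd al s0) (vsub (vsub (c s) (c s0)) (vscale (s - s0) (ce s0))) +
  w * dot (strip_normal ce cdd al s0) (xi s).
Proof.
  intros Hs0. destruct (frame_dir_dots s0 Hs0) as [_ [_ [_ [_ [_ [_ [M7 _]]]]]]].
  destruct (ruling_dots s0 Hs0) as [_ [_ [_ [_ [_ X5]]]]].
  replace (vsub (F s w) (F s0 w0)) with (vadd (vadd (vsub (vsub (c s) (c s0)) (vscale (s - s0) (ce s0)))
      (vscale (s - s0) (ce s0))) (vsub (vscale w (xi s)) (vscale w0 (xi s0))))
    by (apply R3_ext; unfold strip; vunfold; ring).
  dot_expand. rewrite M7, X5. ring.
Qed.

(* Around a point off the curve, the strip lies in a thin cone around its tangent plane. *)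
Lemma strip_flat k0 B s0 w0 eta : 0 < k0 -> 0 <= B -> a <= s0 <= b -> 0 < eta -> exists r0, 0 < r0 /\
  forall s w, a <= s <= b -> Rabs w <= B ->
  let X := vsub (F s w) (F s0 w0) in
  k0 * Rabs (s - s0) <= vnorm X -> vnorm X < r0 ->
  Rabs (dot (strip_normal ce cdd al s0) X) <= eta * vnorm X.
Proof.
  intros Hk0 HB Hs0 Heta.
  destruct curve_taylor as [K [HK HT]].
  set (eta' := eta * k0 / (2 * (B + 1))).
  assert (He' : 0 < eta') by (unfold eta'; apply Rdiv_lt_0_compat; nra).
  destruct (developable_first_order s0 Hs0 eta' He') as [rho' [Hrho' Hdev]].
  exists (Rmin (k0 * rho') (eta * k0 * k0 / (2 * (K + 1)))). split.
  { apply Rmin_glb_lt; [nra|]. apply Rdiv_lt_0_compat; [|lra]. repeat apply Rmult_lt_0_compat; lra. }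
  intros s w Hs Hw X HX HXr.
  pose proof (Rmin_l (k0 * rho') (eta * k0 * k0 / (2 * (K + 1)))).
  pose proof (Rmin_r (k0 * rho') (eta * k0 * k0 / (2 * (K + 1)))).
  set (D := Rabs (s - s0)) in *. pose proof (Rabs_pos (s - s0)) as HD0. fold D in HD0.
  assert (HDr : D < rho') by (apply Rmult_lt_reg_l with k0; lra).
  destruct (frame_dir_dots s0 Hs0) as [_ [_ [_ [_ [_ [M6 _]]]]]].
  unfold X. rewrite (strip_normal_dot_sub s0 s w w0 Hs0). fold X.
  set (m0 := strip_normal ce cdd al s0) in *.
  set (R1 := vsub (vsub (c s) (c s0)) (vscale (s - s0) (ce s0))).
  pose proof (abs_dot_unit R1 m0 M6) as HR1. rewrite dot_comm in HR1.
  pose proof (HT s s0 Hs Hs0) as HT1. fold R1 in HT1.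
  replace ((s - s0) * (s - s0)) with (D * D) in HT1
    by (unfold D; rewrite <- Rabs_mult, Rabs_pos_eq; [ring|apply sq_nonneg]).
  specialize (Hdev s Hs HDr). fold D in Hdev.
  assert (HW : Rabs (w * dot m0 (xi s)) <= B * (eta' * D)) by (rewrite Rabs_mult; apply Rmult_le_compat; auto using Rabs_pos).
  (* both error terms are o(D), and D <= |X| / k0 *)
  assert (HKD : K * D * D <= eta / 2 * vnorm X).
  { assert (K * D <= eta * k0 / 2).
    { apply Rle_trans with (K * (eta * k0 / 2 / (K + 1))); [|apply mul_div_succ_le; nra].
      apply Rmult_le_compat_l; auto. apply Rmult_le_reg_l with k0; auto.
      replace (k0 * (eta * k0 / 2 / (K + 1))) with (eta * k0 * k0 / (2 * (K + 1))) by (field; lra). lra. }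
    apply Rle_trans with (eta * k0 / 2 * D); [apply Rmult_le_compat_r; auto|].
    replace (eta * k0 / 2 * D) with (eta / 2 * (k0 * D)) by field. apply Rmult_le_compat_l; lra. }
  assert (HBD : B * (eta' * D) <= eta / 2 * vnorm X).
  { unfold eta'. replace (B * (eta * k0 / (2 * (B + 1)) * D)) with (B * (eta / 2 / (B + 1)) * (k0 * D)) by (field; lra).
    pose proof (mul_div_succ_le B (eta / 2) HB ltac:(lra)).
    assert (0 <= B * (eta / 2 / (B + 1))) by (apply Rmult_le_pos; [lra|apply Rdiv_le_0_compat; lra]).
    apply Rmult_le_compat; nra. }
  eapply Rle_trans; [apply Rabs_triang|]. lra.
Qed.

End Strip.

(** * The two strips of the origami maps *)

Section Origami.
Context {alpha alpha_d beta betac : R -> R}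
  (Hf : admissible_strip a b ce cdd nd alpha alpha_d beta)
  (Hg : admissible_strip a b ce cdd nd (negf alpha) (negf alpha_d) betac).
#[local] Set Default Proof Using "Hcurve Hf Hg".

Notation F1 := (strip c ce cdd alpha beta).
Notation F2 := (strip c ce cdd (negf alpha) betac).
Notation xi1 := (ruling ce cdd alpha beta).
Notation xi2 := (ruling ce cdd (negf alpha) betac).
Notation phi delta := (phi_img a b c ce cdd alpha beta betac delta).
Notation psi eps := (psi_img a b c ce cdd alpha beta betac eps).

Lemma origami_angles_lower_bound : exists sg, 0 < sg /\ sg <= 1 /\ forall t, a <= t <= b ->
  sg <= sin (beta t) /\ sg <= sin (betac t) /\ sg <= cos (alpha t) /\ sg <= Rabs (sin (alpha t)).
Proof.
  destruct (strip_angles_lower_bound Hf) as [s1 [H1 [H1' A1]]].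
  destruct (strip_angles_lower_bound Hg) as [s2 [H2 [H2' A2]]].
  exists (Rmin s1 s2). pose proof (Rmin_l s1 s2). pose proof (Rmin_r s1 s2).
  split; [apply Rmin_glb_lt; auto|]. split; [lra|].
  intros t Ht. destruct (A1 t Ht) as [B1 [C1 D1]]. destruct (A2 t Ht) as [B2 _].
  pose proof (le_abs_of_le_sq (sin (alpha t)) s1 (Rabs_le _ _ (SIN_bound _)) D1). repeat split; lra.
Qed.

Lemma tangent_rulings_lower_bound s' x w w' sg : a <= s' <= b -> 0 < sg <= 1 ->
  sg <= sin (beta s') -> sg <= sin (betac s') -> sg <= cos (alpha s') -> sg <= Rabs (sin (alpha s')) ->
  sg * sg / 5 * (Rabs x + Rabs w + Rabs w') <=
    vnorm (vadd (vscale x (ce s')) (vsub (vscale w (xi2 s')) (vscale w' (xi1 s')))).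
Proof.
  intros Hs' Hsg Hb1 Hb2 Hca Hsa.
  set (M := vadd (vscale x (ce s')) (vsub (vscale w (xi2 s')) (vscale w' (xi1 s')))).
  destruct (ruling_dots Hf s' Hs') as [_ [E1 [N1 [B1 _]]]].
  destruct (ruling_dots Hg s' Hs') as [_ [E2 [N2 [B2 _]]]].
  replace (cos (negf alpha s')) with (cos (alpha s')) in N2 by (unfold negf; rewrite cos_neg; auto).
  replace (sin (negf alpha s')) with (- sin (alpha s')) in B2 by (unfold negf; rewrite sin_neg; auto).
  destruct (frame_dots s' Hs') as [D1 [D2 [D3 [D4 [_ [D6 _]]]]]].
  assert (Me : dot M (ce s') = x + w * cos (betac s') - w' * cos (beta s')).
  { unfold M. dot_expand. rewrite D1, (dot_comm (xi2 s')), (dot_comm (xi1 s')), E1, E2. ring. }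
  assert (Mn : dot M (normal cdd s') = cos (alpha s') * (w * sin (betac s') - w' * sin (beta s'))).
  { unfold M. dot_expand. rewrite D4, (dot_comm (xi2 s')), (dot_comm (xi1 s')), N1, N2. ring. }
  assert (Mb : dot M (binormal ce cdd s') = - sin (alpha s') * (w * sin (betac s') + w' * sin (beta s'))).
  { unfold M. dot_expand. rewrite D6, (dot_comm (xi2 s')), (dot_comm (xi1 s')), B1, B2. ring. }
  pose proof (abs_dot_unit M _ D1) as Be. rewrite Me in Be.
  pose proof (abs_dot_unit M _ D2) as Bn. rewrite Mn, Rabs_mult, (Rabs_pos_eq (cos (alpha s'))) in Bn by lra.
  pose proof (abs_dot_unit M _ D3) as Bb. rewrite Mb, Rabs_mult, Rabs_Ropp in Bb.
  apply (dual_components_lower_bound x w w' (cos (beta s')) (cos (betac s')) (sin (beta s')) (sin (betac s'))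
    (cos (alpha s')) (sin (alpha s'))); auto; apply Rabs_le, COS_bound.
Qed.

Lemma dual_strips_lower_lip : exists rho eps1 k0, 0 < rho /\ 0 < eps1 /\ 0 < k0 /\
  forall s s' w w', a <= s <= b -> a <= s' <= b -> Rabs (s - s') <= rho -> Rabs w <= eps1 ->
  k0 * (Rabs (s - s') + Rabs w + Rabs w') <= vnorm (vsub (F2 s w) (F1 s' w')).
Proof.
  destruct origami_angles_lower_bound as [sg [Hsg [Hsg1 HA]]].
  destruct (lipbnd3_lip a b _ (ruling_lipbnd Hg)) as [Kx [HKx Lx]].
  destruct curve_taylor as [K [HK HT]].
  set (q := sg * sg / 5). assert (Hq : 0 < q) by (unfold q; nra).
  exists (q / (4 * (K + 1))), (q / (4 * (Kx + 1))), (q / 2).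
  repeat split; try (apply Rdiv_lt_0_compat; lra).
  intros s s' w w' Hs Hs' Hss Hw.
  rewrite strip_sub. apply (curve_perturbation_lower_bound c ce xi2 K Kx); auto; try lra.
  - pose proof (Rabs_pos w). pose proof (Rabs_pos w'). lra.
  - destruct (HA s' Hs') as [A1 [A2 [A3 A4]]]. apply tangent_rulings_lower_bound; auto.
Qed.

(* With 4 eps1 <= mr, points of the strips over parameters further apart than rho are at least mr / 2 apart. *)
Definition origami_constants rho eps1 k0 mr := 0 < rho /\ 0 < eps1 /\ 0 < k0 /\ 0 < mr /\ 4 * eps1 <= mr /\
  (forall s s' w w', a <= s <= b -> a <= s' <= b -> Rabs (s - s') <= rho -> Rabs w <= eps1 ->
     k0 * (Rabs (s - s') + Rabs (w - w')) <= vnorm (vsub (F1 s w) (F1 s' w'))) /\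
  (forall s s' w w', a <= s <= b -> a <= s' <= b -> Rabs (s - s') <= rho -> Rabs w <= eps1 ->
     k0 * (Rabs (s - s') + Rabs (w - w')) <= vnorm (vsub (F2 s w) (F2 s' w'))) /\
  (forall s s' w w', a <= s <= b -> a <= s' <= b -> Rabs (s - s') <= rho -> Rabs w <= eps1 ->
     k0 * (Rabs (s - s') + Rabs w + Rabs w') <= vnorm (vsub (F2 s w) (F1 s' w'))) /\
  (forall s s', a <= s <= b -> a <= s' <= b -> rho < Rabs (s - s') -> mr <= vnorm (vsub (c s) (c s'))).

Lemma origami_constants_exist : exists rho eps1 k0 mr, origami_constants rho eps1 k0 mr.
Proof.
  destruct (strip_lower_lip Hf) as [r1 [e1 [k1 [Hr1 [He1 [Hk1 S1]]]]]].
  destruct (strip_lower_lip Hg) as [r2 [e2 [k2 [Hr2 [He2 [Hk2 S2]]]]]].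
  destruct dual_strips_lower_lip as [r3 [e3 [k3 [Hr3 [He3 [Hk3 S3]]]]]].
  set (rho := Rmin r1 (Rmin r2 r3)).
  pose proof (Rmin_l r1 (Rmin r2 r3)). pose proof (Rmin_r r1 (Rmin r2 r3)). pose proof (Rmin_l r2 r3). pose proof (Rmin_r r2 r3).
  assert (Hrho : 0 < rho) by (unfold rho; repeat apply Rmin_glb_lt; auto).
  destruct (curve_separation rho Hrho) as [mr [Hmr Hsep]].
  set (eps1 := Rmin (Rmin e1 e2) (Rmin e3 (mr / 4))).
  pose proof (Rmin_l (Rmin e1 e2) (Rmin e3 (mr / 4))). pose proof (Rmin_r (Rmin e1 e2) (Rmin e3 (mr / 4))).
  pose proof (Rmin_l e1 e2). pose proof (Rmin_r e1 e2). pose proof (Rmin_l e3 (mr / 4)). pose proof (Rmin_r e3 (mr / 4)).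
  set (k0 := Rmin k1 (Rmin k2 k3)).
  pose proof (Rmin_l k1 (Rmin k2 k3)). pose proof (Rmin_r k1 (Rmin k2 k3)). pose proof (Rmin_l k2 k3). pose proof (Rmin_r k2 k3).
  exists rho, eps1, k0, mr.
  repeat split; try (unfold rho, eps1, k0 in *; repeat apply Rmin_glb_lt; lra); unfold rho, eps1, k0 in *.
  - intros s s' w w' Hs Hs' Hss Hw. eapply Rle_trans; [|apply S1; auto; lra].
    apply Rmult_le_compat_r; [|lra]. pose proof (Rabs_pos (s - s')); pose proof (Rabs_pos (w - w')); lra.
  - intros s s' w w' Hs Hs' Hss Hw. eapply Rle_trans; [|apply S2; auto; lra].
    apply Rmult_le_compat_r; [|lra]. pose proof (Rabs_pos (s - s')); pose proof (Rabs_pos (w - w')); lra.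
  - intros s s' w w' Hs Hs' Hss Hw. eapply Rle_trans; [|apply S3; auto; lra].
    apply Rmult_le_compat_r; [|lra]. pose proof (Rabs_pos (s - s')); pose proof (Rabs_pos w); pose proof (Rabs_pos w'); lra.
  - intros s s' Hs Hs' Hss. apply Hsep; auto. lra.
Qed.

Section Constants.
Context {rho eps1 k0 mr : R} (Hconst : origami_constants rho eps1 k0 mr).
#[local] Set Default Proof Using "Hcurve Hf Hg Hconst".

Lemma strip_points_far X Y s s' w w' : vnorm X = 1 -> vnorm Y = 1 -> a <= s <= b -> a <= s' <= b ->
  rho < Rabs (s - s') -> Rabs w <= eps1 -> Rabs w' <= eps1 ->
  mr / 2 <= vnorm (vsub (vadd (c s) (vscale w X)) (vadd (c s') (vscale w' Y))).
Proof.
  intros HX HY Hs Hs' Hfar Hw Hw'. destruct Hconst as [_ [_ [_ [_ [H4 [_ [_ [_ KF]]]]]]]].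
  pose proof (far_points_apart (c s) (c s') X Y w w' HX HY). pose proof (KF s s' Hs Hs' Hfar). lra.
Qed.

Lemma psi_flat_dual eps s0 w0 : 0 < eps <= eps1 -> a <= s0 <= b -> 0 < w0 < eps ->
  flat_at (psi eps) (F2 s0 w0) (strip_normal ce cdd (negf alpha) s0).
Proof.
  intros Heps Hs0 Hw0 eta Heta. destruct Hconst as [Hrho [He1 [Hk0 [Hmr [H4 [KS1 [KS2 [KC KF]]]]]]]].
  destruct (strip_flat Hg k0 eps1 s0 w0 eta Hk0 ltac:(lra) Hs0 Heta) as [r0 [Hr0 Hcore]].
  exists (Rmin r0 (Rmin (mr / 2) (k0 * w0))). split; [repeat apply Rmin_glb_lt; nra|].
  intros p [t [v [Ht Hp]]] Hpr.
  pose proof (Rmin_l r0 (Rmin (mr / 2) (k0 * w0))). pose proof (Rmin_r r0 (Rmin (mr / 2) (k0 * w0))).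
  pose proof (Rmin_l (mr / 2) (k0 * w0)). pose proof (Rmin_r (mr / 2) (k0 * w0)).
  assert (Hw0a : Rabs w0 <= eps1) by (rewrite Rabs_pos_eq; lra).
  destruct (Rle_lt_dec (Rabs (t - s0)) rho) as [Hnear|Hfar].
  2:{ exfalso. destruct Hp as [[Hv Hp]|[Hv Hp]]; subst p; unfold strip in Hpr.
      - pose proof (strip_points_far _ _ t s0 v w0 (ruling_unit Hg t Ht) (ruling_unit Hg s0 Hs0) Ht Hs0 Hfar
          ltac:(rewrite Rabs_pos_eq; lra) Hw0a). lra.
      - pose proof (strip_points_far _ _ t s0 v w0 (ruling_unit Hf t Ht) (ruling_unit Hg s0 Hs0) Ht Hs0 Hfar
          ltac:(rewrite Rabs_left; lra) Hw0a). lra. }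
  destruct Hp as [[Hv Hp]|[Hv Hp]]; subst p.
  - pose proof (KS2 t s0 v w0 Ht Hs0 Hnear ltac:(rewrite Rabs_pos_eq; lra)) as HK.
    pose proof (Rabs_pos (v - w0)). apply Hcore; [auto|rewrite Rabs_pos_eq; lra| |lra].
    assert (0 <= k0 * Rabs (v - w0)) by (apply Rmult_le_pos; lra). lra.
  - exfalso. pose proof (KC s0 t w0 v Hs0 Ht ltac:(rewrite Rabs_minus_sym; lra) Hw0a) as HK.
    rewrite vnorm_sub_sym, (Rabs_pos_eq w0) in HK by lra.
    pose proof (Rabs_pos (s0 - t)). pose proof (Rabs_pos v). nra.
Qed.

Lemma psi_flat_f eps s0 w0 : 0 < eps <= eps1 -> a <= s0 <= b -> - eps < w0 < 0 ->
  flat_at (psi eps) (F1 s0 w0) (strip_normal ce cdd alpha s0).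
Proof.
  intros Heps Hs0 Hw0 eta Heta. destruct Hconst as [Hrho [He1 [Hk0 [Hmr [H4 [KS1 [KS2 [KC KF]]]]]]]].
  destruct (strip_flat Hf k0 eps1 s0 w0 eta Hk0 ltac:(lra) Hs0 Heta) as [r0 [Hr0 Hcore]].
  exists (Rmin r0 (Rmin (mr / 2) (k0 * (- w0)))). split; [repeat apply Rmin_glb_lt; nra|].
  intros p [t [v [Ht Hp]]] Hpr.
  pose proof (Rmin_l r0 (Rmin (mr / 2) (k0 * (- w0)))). pose proof (Rmin_r r0 (Rmin (mr / 2) (k0 * (- w0)))).
  pose proof (Rmin_l (mr / 2) (k0 * (- w0))). pose proof (Rmin_r (mr / 2) (k0 * (- w0))).
  assert (Hw0a : Rabs w0 <= eps1) by (rewrite Rabs_left; lra).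
  destruct (Rle_lt_dec (Rabs (t - s0)) rho) as [Hnear|Hfar].
  2:{ exfalso. destruct Hp as [[Hv Hp]|[Hv Hp]]; subst p; unfold strip in Hpr.
      - pose proof (strip_points_far _ _ t s0 v w0 (ruling_unit Hg t Ht) (ruling_unit Hf s0 Hs0) Ht Hs0 Hfar
          ltac:(rewrite Rabs_pos_eq; lra) Hw0a). lra.
      - pose proof (strip_points_far _ _ t s0 v w0 (ruling_unit Hf t Ht) (ruling_unit Hf s0 Hs0) Ht Hs0 Hfar
          ltac:(rewrite Rabs_left; lra) Hw0a). lra. }
  destruct Hp as [[Hv Hp]|[Hv Hp]]; subst p.
  - exfalso. pose proof (KC t s0 v w0 Ht Hs0 Hnear ltac:(rewrite Rabs_pos_eq; lra)) as HK.
    rewrite (Rabs_left w0) in HK by lra. pose proof (Rabs_pos (t - s0)). pose proof (Rabs_pos v). nra.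
  - pose proof (KS1 t s0 v w0 Ht Hs0 Hnear ltac:(rewrite Rabs_left; lra)) as HK.
    pose proof (Rabs_pos (v - w0)). apply Hcore; [auto|rewrite Rabs_left; lra| |lra].
    assert (0 <= k0 * Rabs (v - w0)) by (apply Rmult_le_pos; lra). lra.
Qed.

(* Points of psi near c t0 lie, up to a quadratic error, on the side of the osculating plane opposite to the
   first strip, because the two sheets of psi are f on w < 0 and the dual strip on w >= 0. *)
Lemma psi_binormal_side t0 : a <= t0 <= b -> exists C, 0 <= C /\ forall eps p v, 0 < eps <= eps1 -> psi eps p ->
  vnorm (vsub p (c t0)) = v -> v < mr / 2 ->
  k0 * k0 * (sin (alpha t0) * dot (binormal ce cdd t0) (vsub p (c t0))) <= C * (v * v).
Proof.
  intros Ht0. destruct Hconst as [Hrho [He1 [Hk0 [Hmr [H4 [KS1 [KS2 [KC KF]]]]]]]].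
  destruct curve_taylor as [K [HK HT]].
  destruct (lipbnd3_lip a b _ (ruling_lipbnd Hf)) as [Kx1 [HKx1 Lx1]].
  destruct (lipbnd3_lip a b _ (ruling_lipbnd Hg)) as [Kx2 [HKx2 Lx2]].
  exists (K + Kx1 + Kx2). split; [lra|]. intros eps p v Heps [s [w [Hs Hp]]] Hn Hv.
  destruct (ruling_dots Hf t0 Ht0) as [_ [_ [_ [B1 _]]]]. destruct (ruling_dots Hg t0 Ht0) as [_ [_ [_ [B2 _]]]].
  replace (sin (negf alpha t0)) with (- sin (alpha t0)) in B2 by (unfold negf; rewrite sin_neg; auto).
  pose proof (Rabs_le _ _ (SIN_bound (alpha t0))) as Hsa. pose proof (sq_nonneg (sin (alpha t0))).
  pose proof (sin_be_pos Hf t0 Ht0). pose proof (sin_be_pos Hg t0 Ht0).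
  assert (Hv0 : 0 <= v) by (rewrite <- Hn; apply vnorm_ge0). pose proof (sq_nonneg v).
  assert (Hw : Rabs w <= eps1) by (destruct Hp as [[Hw _]|[Hw _]]; unfold Rabs; destruct Rcase_abs; lra).
  destruct (Rle_lt_dec (Rabs (s - t0)) rho) as [Hnear|Hfar].
  2:{ exfalso. rewrite <- (strip_zero c ce cdd alpha beta t0) in Hn.
      destruct Hp as [[_ Hp]|[_ Hp]]; subst p; unfold strip in Hn.
      - pose proof (strip_points_far _ _ s t0 w 0 (ruling_unit Hg s Hs) (ruling_unit Hf t0 Ht0) Hs Ht0 Hfar Hw
          ltac:(rewrite Rabs_R0; lra)). lra.
      - pose proof (strip_points_far _ _ s t0 w 0 (ruling_unit Hf s Hs) (ruling_unit Hf t0 Ht0) Hs Ht0 Hfar Hw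
          ltac:(rewrite Rabs_R0; lra)). lra. }
  destruct Hp as [[Hw0 Hp]|[Hw0 Hp]]; subst p.
  - pose proof (KS2 s t0 w 0 Hs Ht0 Hnear Hw) as HK2. rewrite strip_zero, Rminus_0_r, Hn in HK2.
    assert (0 <= Kx1 * (v * v)) by (apply Rmult_le_pos; lra).
    enough (k0 * k0 * (sin (alpha t0) * dot (binormal ce cdd t0) (vsub (F2 s w) (c t0))) <= (K + Kx2) * (v * v)) by lra.
    apply (curve_offset_binormal_bound _ t0 s w v k0 K Kx2); auto. rewrite B2.
    assert (0 <= w * (sin (betac t0) * (sin (alpha t0) * sin (alpha t0)))) by (apply Rmult_le_pos; [lra|apply Rmult_le_pos; lra]).
    lra.
  - pose proof (KS1 s t0 w 0 Hs Ht0 Hnear Hw) as HK1. rewrite strip_zero, Rminus_0_r, Hn in HK1.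
    assert (0 <= Kx2 * (v * v)) by (apply Rmult_le_pos; lra).
    enough (k0 * k0 * (sin (alpha t0) * dot (binormal ce cdd t0) (vsub (F1 s w) (c t0))) <= (K + Kx1) * (v * v)) by lra.
    apply (curve_offset_binormal_bound _ t0 s w v k0 K Kx1); auto. rewrite B1.
    assert (0 <= sin (beta t0) * (sin (alpha t0) * sin (alpha t0))) by (apply Rmult_le_pos; lra).
    replace (w * (sin (alpha t0) * (sin (beta t0) * sin (alpha t0)))) with (w * (sin (beta t0) * (sin (alpha t0) * sin (alpha t0)))) by ring.
    apply Rmult_le_0_r; lra.
Qed.

Lemma phi_not_in_psi eps delta : 0 < eps <= eps1 -> 0 < delta <= eps ->
  ~ (forall p, phi delta p -> psi eps p).
Proof.
  intros Heps Hdelta Hin. assert (Ha : a <= a <= b) by lra.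
  pose proof Hconst as [_ [_ [Hk0 [Hmr _]]]].
  destruct origami_angles_lower_bound as [sg [Hsg [Hsg1 HA]]]. destruct (HA a Ha) as [A1 [_ [_ A4]]].
  destruct (psi_binormal_side a Ha) as [C [HC Hside]].
  set (q := k0 * k0 * (sg * sg * sg)). assert (Hq : 0 < q) by (unfold q; repeat apply Rmult_lt_0_compat; auto).
  (* a point of f at distance v from c(a), with v small *)
  set (v := Rmin (Rmin delta (mr / 2)) (q / (C + 1)) / 2).
  pose proof (Rmin_l (Rmin delta (mr / 2)) (q / (C + 1))). pose proof (Rmin_r (Rmin delta (mr / 2)) (q / (C + 1))).
  pose proof (Rmin_l delta (mr / 2)). pose proof (Rmin_r delta (mr / 2)).
  assert (Hv : 0 < v) by (unfold v; apply Rdiv_lt_0_compat; [repeat apply Rmin_glb_lt; try lra; apply Rdiv_lt_0_compat; lra|lra]).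
  assert (Hv1 : v < delta) by (unfold v; lra). assert (Hv2 : v < mr / 2) by (unfold v; lra).
  assert (Hvq : (C + 1) * v < q).
  { assert (Hvq : v < q / (C + 1)) by (unfold v in Hv |- *; lra).
    apply Rmult_lt_compat_l with (r := C + 1) in Hvq; [|lra].
    replace ((C + 1) * (q / (C + 1))) with q in Hvq by (field; lra). auto. }
  assert (E : vsub (F1 a v) (c a) = vscale v (xi1 a)) by (apply R3_ext; unfold strip; vunfold; ring).
  assert (Hn : vnorm (vsub (F1 a v) (c a)) = v) by (rewrite E, vnorm_scale, (ruling_unit Hf a Ha), Rabs_pos_eq; lra).
  pose proof (Hside eps (F1 a v) v Heps (Hin _ ltac:(exists a, v; split; auto; left; split; [lra|auto])) Hn Hv2) as Hs.
  destruct (ruling_dots Hf a Ha) as [_ [_ [_ [B1 _]]]].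
  rewrite E, dot_scaler, B1 in Hs.
  (* but f(a, v) lies on the positive side, at height v sin(beta) sin(alpha)^2 >= v sg^3 *)
  assert (Hsg3 : sg * sg * sg <= sin (beta a) * (sin (alpha a) * sin (alpha a))).
  { replace (sin (alpha a) * sin (alpha a)) with (Rabs (sin (alpha a)) * Rabs (sin (alpha a)))
      by (rewrite <- Rabs_mult, Rabs_pos_eq; [ring|apply sq_nonneg]).
    rewrite <- Rmult_assoc. apply Rmult_le_compat; try nra. }
  assert (q * v <= C * (v * v)).
  { eapply Rle_trans; [|exact Hs].
    replace (k0 * k0 * (sin (alpha a) * (v * (sin (beta a) * sin (alpha a)))))
      with (k0 * k0 * v * (sin (beta a) * (sin (alpha a) * sin (alpha a)))) by ring.
    unfold q. replace (k0 * k0 * (sg * sg * sg) * v) with (k0 * k0 * v * (sg * sg * sg)) by ring.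
    apply Rmult_le_compat_l; auto. assert (0 < k0 * k0) by nra. nra. }
  nra.
Qed.

End Constants.

(* At a point of the curve, phi(Omega_delta) contains the curve and segments along both rulings,
   which together with the tangent span R^3; hence no isometric image of it is flat there. *)
Lemma phi_not_flat_on_curve T U delta t m : (forall p q, vsub (T p) (T q) = U (vsub p q)) -> orth_linear U ->
  0 < delta -> a <= t <= b -> dot m m = 1 ->
  ~ flat_at (fun q => exists p, phi delta p /\ q = T p) (T (c t)) m.
Proof.
  intros HTU HU Hdelta Ht Hm Hflat.
  destruct origami_angles_lower_bound as [sg [Hsg [Hsg1 HA]]]. destruct (HA t Ht) as [A1 [A2 [A3 A4]]].
  set (eta := sg * sg / 10). assert (Heta : 0 < eta) by (unfold eta; nra).
  destruct (flat_at_image T U _ _ _ HTU HU Hflat eta Heta) as [r [Hr Hfl]].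
  assert (B1 : Rabs (dot m (U (xi1 t))) <= eta).
  { apply (flat_ray_bound (phi delta) U (c t) (xi1 t) m eta r delta HU (ruling_unit Hf t Ht) Hr Hdelta); auto.
    intros v Hv. exists t, v. split; auto. left. split; [lra|reflexivity]. }
  assert (B2 : Rabs (dot m (U (xi2 t))) <= eta).
  { replace (dot m (U (xi2 t))) with (- dot m (U (vscale (-1) (xi2 t))))
      by (rewrite (orth_scale HU), dot_scaler; ring).
    rewrite Rabs_Ropp.
    apply (flat_ray_bound (phi delta) U (c t) _ m eta r delta HU); auto.
    - rewrite vnorm_scale, (ruling_unit Hg t Ht). rewrite Rabs_left; lra.
    - intros v Hv. exists t, (- v). split; auto. right. split; [lra|].
      apply R3_ext; unfold strip; vunfold; ring. }
  assert (BX : Rabs (dot m (U (ce t))) <= 2 * eta).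
  { apply (flat_tangent_bound (phi delta) U t m eta r HU Ht Heta Hr Hm); auto.
    intros t' Ht'. exists t', 0. split; auto. left. split; [lra|]. rewrite strip_zero; auto. }
  destruct (frame_dots t Ht) as [D1 [D2 [D3 [D4 [_ [D6 [_ [D8 _]]]]]]]].
  pose proof (parseval (U (ce t)) (U (normal cdd t)) (U (binormal ce cdd t)) m) as Par.
  rewrite !(orth_dot HU) in Par. specialize (Par D1 D2 D3 D4 D6 D8). rewrite Hm in Par.
  set (X := dot m (U (ce t))) in *. set (Y := dot m (U (normal cdd t))) in *.
  set (Z := dot m (U (binormal ce cdd t))) in *.
  assert (Hcomp : forall al be, dot m (U (ruling ce cdd al be t)) =
      cos (be t) * X + sin (be t) * (cos (al t) * Y + sin (al t) * Z)).
  { intros al be. unfold X, Y, Z. rewrite ruling_frame_dir. unfold frame_dir.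
    repeat rewrite ?(orth_add HU), ?(orth_scale HU). dot_expand. ring. }
  rewrite Hcomp in B1, B2. unfold negf in B2. rewrite cos_neg, sin_neg in B2.
  replace (cos (alpha t) * Y + - sin (alpha t) * Z) with (cos (alpha t) * Y - sin (alpha t) * Z) in B2 by ring.
  apply (frame_components_not_small X Y Z (cos (alpha t)) (sin (alpha t)) (cos (beta t)) (sin (beta t))
    (cos (betac t)) (sin (betac t)) sg); auto; try (apply Rabs_le, COS_bound); lra.
Qed.

Lemma isometry_maps_curve_into_curve {rho eps1 k0 mr} T : origami_constants rho eps1 k0 mr -> isometry T ->
  forall eps, 0 < eps <= eps1 -> forall delta, 0 < delta <= eps ->
  (forall p, phi delta p -> psi eps (T p)) ->
  forall t, a <= t <= b -> exists s, a <= s <= b /\ T (c t) = c s.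
Proof.
  intros Hconst HT eps Heps delta Hdelta Hin t Ht.
  destruct (isometry_linear_part T HT) as [U [HU HTU]].
  assert (Himg : forall m, flat_at (psi eps) (T (c t)) m -> dot m m = 1 -> False).
  { intros m Hfl Hm. apply (phi_not_flat_on_curve T U delta t m HTU HU ltac:(lra) Ht Hm).
    apply (flat_at_subset _ (psi eps)); auto. intros q [p [Hp Eq]]. subst q. auto. }
  assert (Hct : phi delta (c t)) by (exists t, 0; split; auto; left; split; [lra|rewrite strip_zero; auto]).
  destruct (Hin _ Hct) as [s0 [w0 [Hs0 [[Hw0 Hq]|[Hw0 Hq]]]]].
  - destruct (Req_dec w0 0) as [Hz|Hz].
    + exists s0. split; auto. rewrite Hq, Hz, strip_zero. auto.
    + exfalso. destruct (frame_dir_dots Hg s0 Hs0) as [_ [_ [_ [_ [_ [M6 _]]]]]].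
      apply (Himg _ ltac:(rewrite Hq; apply (psi_flat_dual Hconst eps s0 w0); auto; lra) M6).
  - exfalso. destruct (frame_dir_dots Hf s0 Hs0) as [_ [_ [_ [_ [_ [M6 _]]]]]].
    apply (Himg _ ltac:(rewrite Hq; apply (psi_flat_f Hconst eps s0 w0); auto) M6).
Qed.

End Origami.

End Curve.

Theorem corollary1p2
  (a b : R) (c ce cdd nd : R -> R3) (alpha alpha_d beta betac : R -> R)
  (Hab : a < b)
  (Hc_smooth : smooth3 c)
  (Hce : forall t, deriv3 c ce t)
  (Hcdd : forall t, deriv3 ce cdd t)
  (Harc : forall t, a <= t <= b -> vnorm (ce t) = 1)
  (Hemb : forall s t, a <= s <= b -> a <= t <= b -> c s = c t -> s = t)
  (Hkappa : forall t, a <= t <= b -> 0 < curvature cdd t)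
  (Hnd : forall t, a <= t <= b -> deriv3 (normal cdd) nd t)
  (Halpha_smooth : smooth alpha)
  (Halpha_d : forall t, derivable_pt_lim alpha t (alpha_d t))
  (Halpha : forall t, a <= t <= b -> 0 < Rabs (alpha t) < PI / 2)
  (Hbeta : developable_angle a b ce cdd nd alpha alpha_d beta)
  (Hbetac : developable_angle a b ce cdd nd (negf alpha) (negf alpha_d) betac)
  (Hsym : no_symmetry a b c) :
  exists eps0, 0 < eps0 /\
    forall eps, 0 < eps <= eps0 ->
    forall delta, 0 < delta <= eps ->
      ~ (exists T, isometry T /\
           forall p, phi_img a b c ce cdd alpha beta betac delta p ->
                     psi_img a b c ce cdd alpha beta betac eps (T p)).
Proof.
  assert (Hcurve : frenet_curve a b c ce cdd nd) by (split; auto).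
  assert (Hf : admissible_strip a b ce cdd nd alpha alpha_d beta)
    by (apply admissible_strip_of_smooth; auto; lra).
  assert (Hg : admissible_strip a b ce cdd nd (negf alpha) (negf alpha_d) betac).
  { apply admissible_strip_of_smooth; auto; [lra|apply smooth_opp; auto| |].
    - intros t. apply (derivable_pt_lim_opp alpha), Halpha_d.
    - intros t Ht. unfold negf. rewrite Rabs_Ropp. auto. }
  destruct (origami_constants_exist Hcurve Hf Hg) as [rho [eps1 [k0 [mr Hconst]]]].
  exists eps1. split; [apply Hconst|]. intros eps Heps delta Hdelta [T [HT Hin]].
  pose proof (isometry_maps_curve_into_curve Hcurve Hf Hg T Hconst HT eps Heps delta Hdelta Hin) as Hinto.
  assert (Hid : forall p, T p = p) by (apply Hsym; auto; apply (curve_image_onto Hcurve); auto).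
  apply (phi_not_in_psi Hcurve Hf Hg Hconst eps delta Heps Hdelta).
  intros p Hp. rewrite <- (Hid p). auto.
Qed.
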